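(* Assume in addition that $f:C(\Omega)\to C(\Omega)$ is continuously (Fréchet) differentiable. Then $D(\widehat\tau)$ is an open subset of $BUC_\alpha\times C(\Omega)$ and the map $\widehat\tau:D(\widehat\tau)\to C(\Omega)$ is continuously differentiable.
   Context: $\Omega\subset\mathbb R^n$ compact, $C(\Omega)$ with sup norm, $\alpha\ge0$ fixed. $f:C(\Omega)\to C(\Omega)$ is Lipschitz, $0<f(\phi)(x)\le M_f$ for a constant $M_f$, and non-increasing for the pointwise order. $BUC_\alpha$ is the Banach space of $\phi\in C((-\infty,0],C(\Omega))$ with $t\mapsto e^{-\alpha|t|}\phi(t,\cdot)$ bounded and uniformly continuous, norm $\sup_{t\le0}e^{-\alpha|t|}\|\phi(t,\cdot)\|_\infty$. For $\phi\in BUC_\alpha$, $\overline\phi(s)=\phi(s)$ for $s\le0$, $\overline\phi(s)=\phi(0)$ for $s\ge0$. $D(\widehat\tau)=\{(\phi,\delta)\in BUC_\alpha\times C(\Omega):\delta(x)<\int_{-\infty}^0f(\phi(s,\cdot))(x)ds$ whenever $\delta(x)>0\}$, and for $(\phi,\delta)\in D(\widehat\tau)$, $\widehat\tau(\phi,\delta)\in C(\Omega)$ is the unique function with $\int_{-\widehat\tau(\phi,\delta)(x)}^0f(\overline\phi(s,\cdot))(x)ds=\delta(x)$ for all $x\in\Omega$. *)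

From Stdlib Require Import Reals ClassicalEpsilon.
From Stdlib Require Vectors.Fin.
Open Scope R_scope.

Definition pt (n : nat) : Type := Fin.t n -> R.

Definition near {n : nat} (x y : pt n) (d : R) : Prop :=
  forall i : Fin.t n, Rabs (x i - y i) < d.

Definition compact_set {n : nat} (Om : pt n -> Prop) : Prop :=
  forall u : nat -> pt n, (forall k, Om (u k)) ->
  exists (sub : nat -> nat) (x : pt n),
    (forall k, (sub k < sub (S k))%nat) /\ Om x /\
    forall eps, 0 < eps -> exists N : nat, forall k, (N <= k)%nat ->
      near (u (sub k)) x eps.

(** g is continuous on Omega, i.e. (its restriction) belongs to C(Omega). *)
Definition contC {n : nat} (Om : pt n -> Prop) (g : pt n -> R) : Prop :=
  forall x, Om x -> forall eps, 0 < eps -> exists d, 0 < d /\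
    forall y, Om y -> near x y d -> Rabs (g x - g y) < eps.

Definition supC_le {n : nat} (Om : pt n -> Prop) (g : pt n -> R) (c : R) : Prop :=
  forall x, Om x -> Rabs (g x) <= c.

Definition supBUC_le {n : nat} (Om : pt n -> Prop) (alpha : R)
  (phi : R -> pt n -> R) (c : R) : Prop :=
  forall t x, t <= 0 -> Om x -> exp (- alpha * Rabs t) * Rabs (phi t x) <= c.

(** phi belongs to BUC_alpha (only values at t <= 0 are relevant). *)
Definition BUC {n : nat} (Om : pt n -> Prop) (alpha : R) (phi : R -> pt n -> R) : Prop :=
  (forall t, t <= 0 -> contC Om (phi t)) /\
  (exists c, supBUC_le Om alpha phi c) /\
  (forall eps, 0 < eps -> exists d, 0 < d /\
     forall s t, s <= 0 -> t <= 0 -> Rabs (s - t) < d ->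
     forall x, Om x ->
       Rabs (exp (- alpha * Rabs s) * phi s x - exp (- alpha * Rabs t) * phi t x) <= eps).

Definition phibar {n : nat} (phi : R -> pt n -> R) (s : R) : pt n -> R :=
  if Rle_dec s 0 then phi s else phi 0.

(** Riemann integral (oriented) of g from a to b; 0 if not integrable
    (only used for continuous integrands, where it is the usual integral). *)
Definition Rint (g : R -> R) (a b : R) : R :=
  match excluded_middle_informative (inhabited (Riemann_integrable g a b)) with
  | left H => RiemannInt (epsilon H (fun _ => True))
  | right _ => 0
  end.

Definition prodX (n : nat) : Type := ((R -> pt n -> R) * (pt n -> R))%type.

Definition memP {n : nat} (Om : pt n -> Prop) (alpha : R) (p : prodX n) : Prop :=
  BUC Om alpha (fst p) /\ contC Om (snd p).

(** product norm (max of the two norms) <= c *)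
Definition normP_le {n : nat} (Om : pt n -> Prop) (alpha : R) (p : prodX n) (c : R) : Prop :=
  supBUC_le Om alpha (fst p) c /\ supC_le Om (snd p) c.

Definition addP {n : nat} (p q : prodX n) : prodX n :=
  (fun t y => fst p t y + fst q t y, fun y => snd p y + snd q y).

Definition scalP {n : nat} (a : R) (p : prodX n) : prodX n :=
  (fun t y => a * fst p t y, fun y => a * snd p y).

Definition addF {n : nat} (g h : pt n -> R) : pt n -> R := fun y => g y + h y.
Definition scalF {n : nat} (a : R) (g : pt n -> R) : pt n -> R := fun y => a * g y.

Definition Dtau {n : nat} (Om : pt n -> Prop) (alpha : R)
  (f : (pt n -> R) -> (pt n -> R)) (p : prodX n) : Prop :=
  memP Om alpha p /\
  forall x, Om x -> 0 < snd p x ->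
    exists T, 0 <= T /\ snd p x < Rint (fun s => f (fst p s) x) (- T) 0.

Definition tauhat {n : nat} (f : (pt n -> R) -> (pt n -> R)) (p : prodX n) : pt n -> R :=
  fun x => epsilon (inhabits 0)
    (fun tau => Rint (fun s => f (phibar (fst p) s) x) (- tau) 0 = snd p x).

Definition lipschitzC {n : nat} (Om : pt n -> Prop) (f : (pt n -> R) -> (pt n -> R)) : Prop :=
  exists L, forall g h, contC Om g -> contC Om h -> forall c,
    supC_le Om (fun y => g y - h y) c -> supC_le Om (fun y => f g y - f h y) (L * c).

(** X is given by a membership
    predicate memX, a norm bound predicate nX (nX h c <-> ||h|| <= c),
    addition and scalar multiplication. *)
Definition C1_map {n : nat} (Om : pt n -> Prop) {X : Type}
  (memX : X -> Prop) (nX : X -> R -> Prop) (addX : X -> X -> X) (scalX : R -> X -> X)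
  (D : X -> Prop) (F : X -> pt n -> R) (DF : X -> X -> pt n -> R) : Prop :=
  (forall p, D p -> contC Om (F p)) /\
  (forall p, D p -> forall h, memX h -> contC Om (DF p h)) /\
  (forall p, D p -> forall h1 h2 a b, memX h1 -> memX h2 -> forall x, Om x ->
     DF p (addX (scalX a h1) (scalX b h2)) x = a * DF p h1 x + b * DF p h2 x) /\
  (forall p, D p -> exists K, forall h c, memX h -> nX h c ->
     supC_le Om (DF p h) (K * c)) /\
  (forall p, D p -> forall eps, 0 < eps -> exists d, 0 < d /\
     forall h c, memX h -> D (addX p h) -> nX h c -> c < d ->
       supC_le Om (fun x => F (addX p h) x - F p x - DF p h x) (eps * c)) /\
  (forall p, D p -> forall eps, 0 < eps -> exists d, 0 < d /\
     forall q, D q -> (exists c, c < d /\ nX (addX q (scalX (-1) p)) c) ->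
     forall h c, memX h -> nX h c ->
       supC_le Om (fun x => DF q h x - DF p h x) (eps * c)).

(* [tauhat p x] is defined implicitly by [Phi (fst p) (tauhat p x) x = snd p x], where
   [t |-> Phi (fst p) t x] has derivative [f (phibar (fst p) (-t)) x].  By compactness of
   Omega and monotonicity of [f] this derivative has a positive lower bound on bounded
   time intervals, so [Phi] is strictly increasing at a controlled rate.  Around a point
   of the domain, a Dini argument gives a margin that is uniform in x; it brackets the
   solution for all nearby data, which proves openness together with local Lipschitz
   bounds on [tauhat].  Implicit differentiation then identifies the derivative
     Dtauhat p h = (snd h - int_{-tauhat p}^0 Df (phibar p s) (phibar h s) ds)
                   / f (phibar p (-tauhat p)),
   and the Frechet and operator-continuity estimates reduce to uniform versions, along
   the curve [s |-> phibar p s] over a compact time interval, of the C^1 property of [f]. *)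

From Stdlib Require Import Reals Lra Lia ZArith ClassicalEpsilon FunctionalExtensionality Classical.
From Stdlib Require Import Rtopology.
From Coquelicot Require Import Coquelicot.
Open Scope R_scope.

Lemma Rint_RInt g a b : ex_RInt g a b -> Rint g a b = RInt g a b.
Proof.
  intro H. unfold Rint. destruct (excluded_middle_informative _) as [Hi|Hn].
  - symmetry. apply RInt_Reals.
  - exfalso; apply Hn; constructor; now apply ex_RInt_Reals_0.
Qed.

Lemma RInt_Chasles_R (f : R -> R) a b c : ex_RInt f a b -> ex_RInt f b c ->
  RInt f a b + RInt f b c = RInt f a c.
Proof. intros; rewrite <- (RInt_Chasles f a b c) by auto; reflexivity. Qed.

Lemma RInt_swap_R (f : R -> R) a b : ex_RInt f a b -> RInt f b a = - RInt f a b.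
Proof. intros H. rewrite <- (opp_RInt_swap f a b H). reflexivity. Qed.

Lemma RInt_minus_R (f g : R -> R) a b : ex_RInt f a b -> ex_RInt g a b ->
  RInt (fun s => f s - g s) a b = RInt f a b - RInt g a b.
Proof. exact (RInt_minus f g a b). Qed.

Lemma ex_RInt_minus_R (f g : R -> R) a b : ex_RInt f a b -> ex_RInt g a b ->
  ex_RInt (fun s => f s - g s) a b.
Proof. exact (ex_RInt_minus f g a b). Qed.

Lemma RInt_lin_R (f g : R -> R) a b u v : ex_RInt f a b -> ex_RInt g a b ->
  RInt (fun s => u * f s + v * g s) a b = u * RInt f a b + v * RInt g a b.
Proof.
  intros Hf Hg.
  assert (E1 : RInt (fun s => u * f s) a b = u * RInt f a b) by exact (RInt_scal f a b u Hf).
  assert (E2 : RInt (fun s => v * g s) a b = v * RInt g a b) by exact (RInt_scal g a b v Hg).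
  rewrite <- E1, <- E2.
  exact (RInt_plus _ _ a b (ex_RInt_scal f a b u Hf) (ex_RInt_scal g a b v Hg)).
Qed.

Lemma RInt_const_R a b (c : R) : RInt (fun _ => c) a b = (b - a) * c.
Proof. exact (RInt_const (V := R_CompleteNormedModule) a b c). Qed.

Lemma abs_RInt_le_length (f : R -> R) a b M : ex_RInt f a b ->
  (forall t, Rmin a b <= t <= Rmax a b -> Rabs (f t) <= M) ->
  Rabs (RInt f a b) <= Rabs (b - a) * M.
Proof.
  intros H Hb. destruct (Rle_dec a b) as [l|l].
  - rewrite (Rabs_right (b - a)) by lra. apply abs_RInt_le_const; auto.
    intros t Ht; apply Hb. rewrite Rmin_left, Rmax_right; lra.
  - rewrite (RInt_swap_R f b a) by (now apply ex_RInt_swap).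
    rewrite Rabs_Ropp.
    replace (Rabs (b - a)) with (a - b) by (rewrite Rabs_left by lra; ring).
    apply abs_RInt_le_const; try lra.
    + now apply ex_RInt_swap.
    + intros t Ht; apply Hb. rewrite Rmin_right, Rmax_left; lra.
Qed.

Lemma RInt_ge_length (f : R -> R) a b m : a <= b -> ex_RInt f a b ->
  (forall t, a <= t <= b -> m <= f t) -> (b - a) * m <= RInt f a b.
Proof.
  intros ab H Hm. rewrite <- RInt_const_R.
  apply RInt_le; auto; [apply ex_RInt_const|]. intros; apply Hm; lra.
Qed.

Lemma continuity_pt_le_eps (f : R -> R) z :
  (forall eps, 0 < eps -> exists d, 0 < d /\ forall t, Rabs (t - z) < d -> Rabs (f t - f z) <= eps) ->
  continuity_pt f z.
Proof.
  intros H eps Heps. destruct (H (eps/2)) as [d [Hd Ht]]; [lra|].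
  exists d; split; auto. intros t [_ Hx]. simpl in *. unfold R_dist in *.
  specialize (Ht t Hx). lra.
Qed.

Lemma ex_RInt_continuity (f : R -> R) a b : (forall z, continuity_pt f z) -> ex_RInt f a b.
Proof.
  intros H. apply (@ex_RInt_continuous R_CompleteNormedModule). intros z _.
  apply continuity_pt_filterlim. apply H.
Qed.

Lemma Rabs_triang_minus (a b : R) : Rabs (a - b) <= Rabs a + Rabs b.
Proof. unfold Rminus. rewrite <- (Rabs_Ropp b). apply Rabs_triang. Qed.

Lemma Rabs_le_segment (a b t S : R) : Rabs a <= S -> Rabs b <= S ->
  Rmin a b <= t <= Rmax a b -> Rabs t <= S.
Proof.
  intros Ha Hb Ht. apply Rabs_le.
  apply Rabs_le_between in Ha. apply Rabs_le_between in Hb.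
  split; [apply Rle_trans with (Rmin a b) | apply Rle_trans with (Rmax a b)]; try lra;
  [apply Rmin_case | apply Rmax_case]; lra.
Qed.

Lemma Rabs_sub_le_segment (a b t : R) :
  Rmin a b <= t <= Rmax a b -> Rabs (t - b) <= Rabs (a - b).
Proof.
  intros Ht. apply Rabs_le.
  pose proof (Rle_abs (a - b)). pose proof (Rle_abs (-(a - b))). rewrite Rabs_Ropp in *.
  assert (Rmin a b >= b - Rabs (a - b)) by (apply Rmin_case; lra).
  assert (Rmax a b <= b + Rabs (a - b)) by (apply Rmax_case; lra). lra.
Qed.

Lemma Rmult_succ_div_lt (K e : R) : 0 <= K -> 0 < e -> K * (e / (K + 1)) < e.
Proof.
  intros HK He. replace (K * (e / (K + 1))) with (e - e / (K + 1)) by (field; lra).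
  assert (0 < e / (K + 1)) by (apply Rdiv_lt_0_compat; lra). lra.
Qed.

Lemma Rmult_le_of_le_succ_div (K c e : R) : 0 <= K -> 0 <= c -> c <= e / (K + 1) -> K * c <= e.
Proof.
  intros HK Hc Hce. apply Rle_trans with ((K + 1) * c); [nra|].
  apply Rle_trans with ((K + 1) * (e / (K + 1))); [apply Rmult_le_compat_l; lra|].
  right; field; lra.
Qed.

Lemma exp_le x y : x <= y -> exp x <= exp y.
Proof. intros H. destruct (Rle_lt_or_eq _ _ H) as [H1|H1]; [left; now apply exp_increasing| subst; lra]. Qed.

Lemma exp_lip_ordered a b : b <= a -> Rabs (exp a - exp b) <= exp a * Rabs (a - b).
Proof.
  intros Hab. pose proof (exp_ineq1_le (b - a)). pose proof (exp_pos a).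
  assert (E : exp b = exp a * exp (b - a)) by (rewrite <- exp_plus; f_equal; ring).
  assert (exp (b - a) <= 1) by (rewrite <- exp_0; apply exp_le; lra).
  rewrite E, Rabs_right, (Rabs_right (a - b)) by nra.
  replace (exp a - exp a * exp (b - a)) with (exp a * (1 - exp (b - a))) by ring.
  apply Rmult_le_compat_l; lra.
Qed.

Lemma exp_lip a b : Rabs (exp a - exp b) <= exp (Rmax a b) * Rabs (a - b).
Proof.
  destruct (Rle_dec b a) as [H|H].
  - rewrite Rmax_left by lra. now apply exp_lip_ordered.
  - rewrite Rmax_right, Rabs_minus_sym, (Rabs_minus_sym a) by lra. apply exp_lip_ordered; lra.
Qed.

Lemma INR_unbounded (r : R) : exists N : nat, r < INR N.
Proof.
  destruct (archimed r) as [H _]. destruct (Rle_dec r 0).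
  - exists 1%nat. simpl; lra.
  - assert (0 < IZR (up r)) by lra. apply lt_0_IZR in H0.
    exists (Z.to_nat (up r)). rewrite INR_IZR_INZ. rewrite Z2Nat.id by lia. auto.
Qed.

Lemma inv_INR_S_pos N : 0 < / INR (S N).
Proof. apply Rinv_0_lt_compat, lt_0_INR; lia. Qed.

Lemma inv_INR_S_small r : 0 < r -> exists N0 : nat, forall N, (N0 <= N)%nat -> / INR (S N) <= r.
Proof.
  intros Hr. destruct (INR_unbounded (/ r)) as [N0 HN0]. exists N0. intros N HN.
  assert (INR N0 <= INR N) by (apply le_INR; auto).
  rewrite S_INR. assert (0 < / r) by (apply Rinv_0_lt_compat; auto).
  replace r with (/ / r) by (field; lra). left. apply Rinv_lt_contravar; [apply Rmult_lt_0_compat|]; lra.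
Qed.

(* Bolzano-Weierstrass on [a, b], phrased for proofs by contradiction. *)
Lemma segment_cluster a b (P : nat -> R -> Prop) :
  (forall N, exists s, a <= s <= b /\ P N s) ->
  exists ss, a <= ss <= b /\ forall eps, 0 < eps -> forall N0,
    exists N s, (N0 <= N)%nat /\ a <= s <= b /\ P N s /\ Rabs (s - ss) < eps.
Proof.
  intros HP.
  set (u := fun N => epsilon (inhabits 0) (fun s => a <= s <= b /\ P N s)).
  assert (Hu : forall N, a <= u N <= b /\ P N (u N)).
  { intro N. unfold u. apply epsilon_spec. apply HP. }
  destruct (Bolzano_Weierstrass u _ (compact_P3 a b) (fun N => proj1 (Hu N))) as [l Hl].
  assert (Hl' : forall eps, 0 < eps -> forall N0, exists N, (N0 <= N)%nat /\ Rabs (u N - l) < eps).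
  { intros eps He N0. apply (Hl (fun y => Rabs (y - l) < eps) N0).
    exists (mkposreal eps He). intros y Hy. exact Hy. }
  assert (Hab : a <= l <= b).
  { split; apply Rnot_lt_le; intro Hc.
    - destruct (Hl' (a - l) ltac:(lra) 0%nat) as [N [_ HN]].
      destruct (Hu N) as [[H1 H2] _]. apply Rabs_def2 in HN. lra.
    - destruct (Hl' (l - b) ltac:(lra) 0%nat) as [N [_ HN]].
      destruct (Hu N) as [[H1 H2] _]. apply Rabs_def2 in HN. lra. }
  exists l; split; auto. intros eps He N0.
  destruct (Hl' eps He N0) as [N [HN Hd]]. exists N, (u N). repeat split; try apply Hu; auto.
Qed.

Lemma abs_RInt_le_on_ball (g : R -> R) a b Sb W : ex_RInt g a b -> Rabs a <= Sb -> Rabs b <= Sb ->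
  (forall s, Rabs s <= Sb -> Rabs (g s) <= W) -> Rabs (RInt g a b) <= Rabs (b - a) * W.
Proof.
  intros Hg Ha Hb HW. apply abs_RInt_le_length; auto.
  intros s Hs. apply HW. now apply (Rabs_le_segment a b).
Qed.

Lemma abs_RInt_to_zero_le (g : R -> R) t Sb W : ex_RInt g (- t) 0 -> Rabs t <= Sb ->
  (forall s, Rabs s <= Sb -> Rabs (g s) <= W) -> Rabs (RInt g (- t) 0) <= Sb * W.
Proof.
  intros Hg Ht HW.
  assert (W0 : 0 <= W).
  { pose proof (HW 0 ltac:(rewrite Rabs_R0; pose proof (Rabs_pos t); lra)). pose proof (Rabs_pos (g 0)). lra. }
  eapply Rle_trans; [apply (abs_RInt_le_on_ball g _ _ Sb W Hg); auto|].
  - now rewrite Rabs_Ropp.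
  - rewrite Rabs_R0. pose proof (Rabs_pos t). lra.
  - replace (0 - - t) with t by ring. apply Rmult_le_compat_r; auto.
Qed.

Lemma RInt_to_zero_diff_le (g0 g : R -> R) t0 t Sb W e :
  (forall a b, ex_RInt g0 a b) -> (forall a b, ex_RInt g a b) ->
  Rabs t0 <= Sb -> Rabs t <= Sb ->
  (forall s, Rabs s <= Sb -> Rabs (g0 s) <= W) ->
  (forall s, Rabs s <= Sb -> Rabs (g0 s - g s) <= e) ->
  Rabs (RInt g0 (- t0) 0 - RInt g (- t) 0) <= Rabs (t0 - t) * W + Sb * e.
Proof.
  intros I0 I Ht0 Ht HW He.
  rewrite <- (RInt_Chasles_R g0 (- t0) (- t) 0) by auto.
  replace (RInt g0 (- t0) (- t) + RInt g0 (- t) 0 - RInt g (- t) 0)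
    with (RInt g0 (- t0) (- t) + RInt (fun s => g0 s - g s) (- t) 0)
    by (rewrite RInt_minus_R by auto; unfold Rminus; symmetry; apply Rplus_assoc).
  eapply Rle_trans; [apply Rabs_triang|]. apply Rplus_le_compat.
  - replace (Rabs (t0 - t)) with (Rabs (- t - - t0)) by (f_equal; ring).
    apply (abs_RInt_le_on_ball _ _ _ Sb); auto; now rewrite Rabs_Ropp.
  - apply abs_RInt_to_zero_le; auto. now apply ex_RInt_minus_R.
Qed.

Lemma implicit_increment_identity (kq kp w : R -> R) t t' a hd :
  (forall u v, ex_RInt kq u v) -> (forall u v, ex_RInt kp u v) -> (forall u v, ex_RInt w u v) ->
  a <> 0 -> RInt kq (- t') 0 = RInt kp (- t) 0 + hd ->
  t' - t - (hd - RInt w (- t) 0) / a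
    = - (RInt (fun s => kq s - a) (- t') (- t) + RInt (fun s => kq s - kp s - w s) (- t) 0) / a.
Proof.
  intros Iq Ip Iw Ha E.
  rewrite (RInt_minus_R (fun s => kq s - kp s) w) by (auto; apply ex_RInt_minus_R; auto).
  rewrite !RInt_minus_R by (auto; apply ex_RInt_const).
  rewrite RInt_const_R.
  rewrite <- (RInt_Chasles_R kq (- t') (- t) 0) in E by auto.
  field_simplify_eq; [|exact Ha]. lra.
Qed.

Lemma Rabs_div_diff_le a0 a b0 b m : 0 < m -> m <= b0 -> m <= b ->
  Rabs (a0 / b0 - a / b) <= (Rabs (a0 - a) * b0 + Rabs a0 * Rabs (b - b0)) / (m * m).
Proof.
  intros Hm H0 H1.
  replace (a0 / b0 - a / b) with (((a0 - a) * b0 + a0 * (b - b0)) / (b0 * b)) by (field; lra).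
  unfold Rdiv. rewrite Rabs_mult, Rabs_inv, Rabs_mult, (Rabs_right b0), (Rabs_right b) by lra.
  apply Rmult_le_compat.
  - apply Rabs_pos.
  - left. apply Rinv_0_lt_compat. nra.
  - eapply Rle_trans; [apply Rabs_triang|]. rewrite !Rabs_mult, (Rabs_right b0) by lra. lra.
  - apply Rinv_le_contravar; [nra|]. apply Rmult_le_compat; lra.
Qed.

Lemma Rabs_quot_diff_le u Jp Jq ap aq m : 0 < m -> m <= ap -> m <= aq ->
  Rabs ((u - Jq) / aq - (u - Jp) / ap) <= Rabs (u - Jq) * Rabs (ap - aq) / (m * m) + Rabs (Jp - Jq) / m.
Proof.
  intros Hm Hp Hq.
  replace ((u - Jq) / aq - (u - Jp) / ap) with ((u - Jq) * (ap - aq) / (aq * ap) + (Jp - Jq) / ap)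
    by (field; lra).
  eapply Rle_trans; [apply Rabs_triang|]. apply Rplus_le_compat; unfold Rdiv.
  - rewrite !Rabs_mult, Rabs_inv, Rabs_mult, (Rabs_right aq), (Rabs_right ap) by lra.
    apply Rmult_le_compat_l; [apply Rmult_le_pos; apply Rabs_pos|].
    apply Rinv_le_contravar; [nra|]. apply Rmult_le_compat; lra.
  - rewrite Rabs_mult, Rabs_inv, (Rabs_right ap) by lra.
    apply Rmult_le_compat_l; [apply Rabs_pos|]. apply Rinv_le_contravar; lra.
Qed.

Lemma pos_lower_bound4 (a b c e : R) : 0 < a -> 0 < b -> 0 < c -> 0 < e ->
  exists d, 0 < d /\ d <= a /\ d <= b /\ d <= c /\ d <= e.
Proof.
  intros Ha Hb Hc He. exists (Rmin (Rmin a b) (Rmin c e)).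
  repeat split; try (repeat apply Rmin_glb_lt; auto).
  - eapply Rle_trans; apply Rmin_l.
  - eapply Rle_trans; [apply Rmin_l | apply Rmin_r].
  - eapply Rle_trans; [apply Rmin_r | apply Rmin_l].
  - eapply Rle_trans; apply Rmin_r.
Qed.

Lemma taylor_budget_le (K1 Sb m eps c dtau a : R) : 0 <= K1 -> 0 <= Sb -> 0 < m -> 0 < eps -> 0 <= c ->
  0 <= a -> a <= eps * m / 4 / (K1 + 1) -> 0 <= dtau <= K1 * c ->
  (dtau * (a + eps * m / 4 / (K1 + 1)) + Sb * (eps * m / 2 / (Sb + 1) * c)) / m <= eps * c.
Proof.
  intros HK1 HSb Hm He Hc Ha Hae Hd.
  apply (Rmult_le_reg_l m); auto. unfold Rdiv at 1.
  rewrite <- Rmult_assoc, (Rmult_comm m), Rmult_assoc, Rinv_r, Rmult_1_r by lra.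
  assert (dtau * (a + eps * m / 4 / (K1 + 1)) <= c * (K1 * (eps * m / 2 / (K1 + 1)))).
  { apply Rle_trans with (K1 * c * (2 * (eps * m / 4 / (K1 + 1)))); [|right; field; lra].
    apply Rmult_le_compat; lra. }
  assert (K1 * (eps * m / 2 / (K1 + 1)) < eps * m / 2) by (apply Rmult_succ_div_lt; auto; nra).
  assert (Sb * (eps * m / 2 / (Sb + 1)) < eps * m / 2) by (apply Rmult_succ_div_lt; auto; nra).
  nra.
Qed.

Lemma quotient_budget_le (Kw Sb m eps dtau ee : R) : 0 <= Kw -> 0 <= Sb -> 0 < m -> 0 < eps ->
  0 <= dtau <= eps * m / 4 / (Kw + 1) -> 0 <= ee <= eps * m / 4 / (Sb + 1) ->
  (1 + Sb * (Kw + 1)) * (eps * (m * m) / 2 / (1 + Sb * (Kw + 1))) / (m * m) + (dtau * Kw + Sb * ee) / m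
    <= eps.
Proof.
  intros HKw HSb Hm He Hd Hee.
  assert (HNB : 0 < 1 + Sb * (Kw + 1)) by (pose proof (Rmult_le_pos Sb (Kw + 1) HSb ltac:(lra)); lra).
  replace ((1 + Sb * (Kw + 1)) * (eps * (m * m) / 2 / (1 + Sb * (Kw + 1))) / (m * m)) with (eps / 2)
    by (field; split; lra).
  assert (dtau * Kw <= eps * m / 4) by (rewrite Rmult_comm; apply Rmult_le_of_le_succ_div; lra).
  assert (Sb * ee <= eps * m / 4) by (apply Rmult_le_of_le_succ_div; lra).
  enough ((dtau * Kw + Sb * ee) / m <= eps / 2) by lra.
  apply Rle_trans with (eps * m / 2 / m); [unfold Rdiv; apply Rmult_le_compat_r; [left; apply Rinv_0_lt_compat|]; lra|].
  right. field. lra.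
Qed.

(** * Continuity on the compact set *)

Section ContinuityOnOmega.
Context {n : nat}.
Variable Om : pt n -> Prop.

Lemma near_sym (x y : pt n) d : near x y d -> near y x d.
Proof. intros H i. rewrite Rabs_minus_sym. apply H. Qed.

Lemma near_mono (x y : pt n) d d' : near x y d -> d <= d' -> near x y d'.
Proof. intros H Hd i. specialize (H i). lra. Qed.

Lemma near_Rmin_l (x y : pt n) d1 d2 : near x y (Rmin d1 d2) -> near x y d1.
Proof. intros H. apply (near_mono _ _ _ _ H), Rmin_l. Qed.

Lemma near_Rmin_r (x y : pt n) d1 d2 : near x y (Rmin d1 d2) -> near x y d2.
Proof. intros H. apply (near_mono _ _ _ _ H), Rmin_r. Qed.

Lemma contC_const c : contC Om (fun _ => c).
Proof. intros x _ eps He. exists 1; split; [lra|]. intros. rewrite Rminus_diag, Rabs_R0; lra. Qed.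

Lemma contC_lin g h a b : contC Om g -> contC Om h -> contC Om (fun y => a * g y + b * h y).
Proof.
  intros Hg Hh x Hx eps He.
  pose proof (Rabs_pos a). pose proof (Rabs_pos b).
  destruct (Hg x Hx (eps / 2 / (Rabs a + 1))) as [d1 [Hd1 H1]].
  { apply Rdiv_lt_0_compat; lra. }
  destruct (Hh x Hx (eps / 2 / (Rabs b + 1))) as [d2 [Hd2 H2]].
  { apply Rdiv_lt_0_compat; lra. }
  exists (Rmin d1 d2); split; [now apply Rmin_glb_lt|].
  intros y Hy Hn.
  specialize (H1 y Hy (near_Rmin_l _ _ _ _ Hn)). specialize (H2 y Hy (near_Rmin_r _ _ _ _ Hn)).
  replace (a * g x + b * h x - (a * g y + b * h y)) with (a * (g x - g y) + b * (h x - h y)) by ring.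
  eapply Rle_lt_trans; [apply Rabs_triang|]. rewrite !Rabs_mult.
  pose proof (Rmult_succ_div_lt (Rabs a) (eps / 2) ltac:(lra) ltac:(lra)).
  pose proof (Rmult_succ_div_lt (Rabs b) (eps / 2) ltac:(lra) ltac:(lra)).
  assert (Rabs a * Rabs (g x - g y) <= Rabs a * (eps / 2 / (Rabs a + 1))) by (apply Rmult_le_compat_l; lra).
  assert (Rabs b * Rabs (h x - h y) <= Rabs b * (eps / 2 / (Rabs b + 1))) by (apply Rmult_le_compat_l; lra).
  lra.
Qed.

Lemma contC_ext g h : contC Om g -> (forall x, Om x -> g x = h x) -> contC Om h.
Proof.
  intros Hg E x Hx eps He. destruct (Hg x Hx eps He) as [d [Hd H]]. exists d; split; auto.
  intros y Hy N. rewrite <- !E by auto. auto.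
Qed.

Lemma contC_plus g h : contC Om g -> contC Om h -> contC Om (fun y => g y + h y).
Proof. intros. apply (contC_ext (fun y => 1 * g y + 1 * h y)); [now apply contC_lin|]. intros; ring. Qed.

Lemma contC_minus g h : contC Om g -> contC Om h -> contC Om (fun y => g y - h y).
Proof. intros. apply (contC_ext (fun y => 1 * g y + (-1) * h y)); [now apply contC_lin|]. intros; ring. Qed.

Lemma contC_scal a g : contC Om g -> contC Om (fun y => a * g y).
Proof. intros. apply (contC_ext (fun y => a * g y + 0 * g y)); [now apply contC_lin|]. intros; ring. Qed.

Lemma contC_div g h m : contC Om g -> contC Om h -> 0 < m -> (forall x, Om x -> m <= h x) ->
  contC Om (fun x => g x / h x).
Proof.
  intros Hg Hh Hm Hhm x0 Hx0 eps He.
  assert (Hmm : 0 < eps * (m * m) / 2) by (apply Rdiv_lt_0_compat; [apply Rmult_lt_0_compat; nra|lra]).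
  pose proof (Rabs_pos (h x0)). pose proof (Rabs_pos (g x0)).
  destruct (Hg x0 Hx0 (eps * (m * m) / 2 / (Rabs (h x0) + 1))) as [r1 [Hr1 H1]].
  { apply Rdiv_lt_0_compat; lra. }
  destruct (Hh x0 Hx0 (eps * (m * m) / 2 / (Rabs (g x0) + 1))) as [r2 [Hr2 H2]].
  { apply Rdiv_lt_0_compat; lra. }
  exists (Rmin r1 r2). split; [apply Rmin_glb_lt; auto|]. intros x Hx Hn.
  specialize (H1 x Hx (near_Rmin_l _ _ _ _ Hn)). specialize (H2 x Hx (near_Rmin_r _ _ _ _ Hn)).
  pose proof (Hhm x Hx). pose proof (Hhm x0 Hx0).
  eapply Rle_lt_trans; [apply (Rabs_div_diff_le _ _ _ _ m); auto|].
  apply (Rmult_lt_reg_r (m * m)); [nra|]. unfold Rdiv at 1.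
  rewrite Rmult_assoc, Rinv_l, Rmult_1_r by nra.
  rewrite (Rabs_minus_sym (h x)).
  pose proof (Rmult_succ_div_lt (Rabs (h x0)) (eps * (m * m) / 2) ltac:(lra) Hmm).
  pose proof (Rmult_succ_div_lt (Rabs (g x0)) (eps * (m * m) / 2) ltac:(lra) Hmm).
  assert (Rabs (g x0 - g x) * h x0 <= Rabs (h x0) * (eps * (m * m) / 2 / (Rabs (h x0) + 1))).
  { rewrite (Rmult_comm (Rabs (g x0 - g x))).
    apply Rmult_le_compat; [lra | apply Rabs_pos | apply Rle_abs | lra]. }
  assert (Rabs (g x0) * Rabs (h x0 - h x) <= Rabs (g x0) * (eps * (m * m) / 2 / (Rabs (g x0) + 1))).
  { apply Rmult_le_compat_l; lra. }
  lra.
Qed.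

Lemma compact_set_cluster : compact_set Om ->
  forall P : nat -> pt n -> Prop, (forall N, exists x, Om x /\ P N x) ->
  exists xs, Om xs /\ forall eps, 0 < eps -> forall N0,
    exists N x, (N0 <= N)%nat /\ Om x /\ P N x /\ near xs x eps.
Proof.
  intros HC P HP.
  set (u := fun N => epsilon (inhabits (fun _ : Fin.t n => 0)) (fun x => Om x /\ P N x)).
  assert (Hu : forall N, Om (u N) /\ P N (u N)).
  { intro N. unfold u. apply epsilon_spec. apply HP. }
  destruct (HC u (fun N => proj1 (Hu N))) as [sub [xs [Hs [Hx Hc]]]].
  exists xs; split; auto. intros eps He N0.
  destruct (Hc eps He) as [N1 HN1].
  assert (Hge : forall k, (k <= sub k)%nat).
  { induction k; [lia|]. specialize (Hs k). lia. }
  exists (sub (Nat.max N0 N1)), (u (sub (Nat.max N0 N1))). split; [|split;[|split]].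
  - specialize (Hge (Nat.max N0 N1)). lia.
  - apply Hu.
  - apply Hu.
  - apply near_sym. apply HN1. lia.
Qed.

Lemma contC_bounded g : compact_set Om -> contC Om g ->
  exists B, 0 <= B /\ forall x, Om x -> Rabs (g x) <= B.
Proof.
  intros HC Hg. apply NNPP. intro Hn.
  assert (HP : forall N : nat, exists x, Om x /\ INR N < Rabs (g x)).
  { intro N. apply NNPP. intro H2. apply Hn. exists (INR N). split; [apply pos_INR|].
    intros x Hx. apply Rnot_lt_le. intro H3. apply H2. eauto. }
  destruct (compact_set_cluster HC _ HP) as [xs [Hxs Hcl]].
  destruct (Hg xs Hxs 1) as [d [Hd Hn2]]; [lra|].
  destruct (INR_unbounded (Rabs (g xs) + 1)) as [N0 HN0].
  destruct (Hcl d Hd N0) as [N [x [HN [Hx [Hgx Hnx]]]]].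
  specialize (Hn2 x Hx Hnx).
  assert (INR N0 <= INR N) by (apply le_INR; auto).
  pose proof (Rabs_triang_inv (g x) (g xs)). rewrite Rabs_minus_sym in Hn2. lra.
Qed.

Lemma contC_pos_lower_bound g : compact_set Om -> contC Om g ->
  (forall x, Om x -> 0 < g x) -> exists m, 0 < m /\ forall x, Om x -> m <= g x.
Proof.
  intros HC Hg Hpos. apply NNPP. intro Hn.
  assert (HP : forall N : nat, exists x, Om x /\ g x < / INR (S N)).
  { intro N. apply NNPP. intro H2. apply Hn. exists (/ INR (S N)). split; [apply inv_INR_S_pos|].
    intros x Hx. apply Rnot_lt_le. intro H3. apply H2. eauto. }
  destruct (compact_set_cluster HC _ HP) as [xs [Hxs Hcl]].
  pose proof (Hpos xs Hxs) as Hp.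
  destruct (Hg xs Hxs (g xs / 2)) as [d [Hd Hn2]]; [lra|].
  destruct (inv_INR_S_small (g xs / 2)) as [N0 HN0]; [lra|].
  destruct (Hcl d Hd N0) as [N [x [HN [Hx [Hgx Hnx]]]]].
  specialize (Hn2 x Hx Hnx). specialize (HN0 N HN).
  pose proof (Rle_abs (g xs - g x)). lra.
Qed.

End ContinuityOnOmega.

(** * Curves in C(Omega) *)

Lemma phibar_Rmin {n} (phi : R -> pt n -> R) s : phibar phi s = phi (Rmin s 0).
Proof. unfold phibar. destruct (Rle_dec s 0); [rewrite Rmin_left | rewrite Rmin_right]; auto; lra. Qed.

Lemma Rabs_Rmin_0 s : Rabs (Rmin s 0) <= Rabs s.
Proof. unfold Rmin. destruct (Rle_dec s 0); [lra|]. rewrite Rabs_R0. apply Rabs_pos. Qed.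

Lemma Rmin_0_dist s t : Rabs (Rmin s 0 - Rmin t 0) <= Rabs (s - t).
Proof.
  unfold Rmin. destruct (Rle_dec s 0), (Rle_dec t 0); try lra.
  - rewrite Rminus_0_r. rewrite !Rabs_left1 by lra. lra.
  - rewrite Rminus_0_l, Rabs_Ropp. rewrite Rabs_left1 by lra. rewrite Rabs_right by lra. lra.
  - rewrite Rminus_diag, Rabs_R0. apply Rabs_pos.
Qed.

Lemma exp_unweight (a y : R) : y = exp a * (exp (- a) * y).
Proof. rewrite <- Rmult_assoc, <- exp_plus, Rplus_opp_r, exp_0. ring. Qed.

Lemma exp_weight_diff_le alpha S C s t u v : 0 <= alpha -> Rabs s <= S -> Rabs t <= S -> Rabs v <= C ->
  Rabs (exp (alpha * Rabs s) * u - exp (alpha * Rabs t) * v)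
    <= exp (alpha * S) * (Rabs (u - v) + alpha * Rabs (s - t) * C).
Proof.
  intros Ha Hs Ht Hv.
  replace (exp (alpha * Rabs s) * u - exp (alpha * Rabs t) * v) with
     (exp (alpha * Rabs s) * (u - v) + (exp (alpha * Rabs s) - exp (alpha * Rabs t)) * v) by ring.
  eapply Rle_trans; [apply Rabs_triang|]. rewrite !Rabs_mult, (Rabs_right (exp _)) by (left; apply exp_pos).
  assert (Es : exp (alpha * Rabs s) <= exp (alpha * S)) by (apply exp_le, Rmult_le_compat_l; auto).
  assert (Ed : Rabs (exp (alpha * Rabs s) - exp (alpha * Rabs t)) <= exp (alpha * S) * (alpha * Rabs (s - t))).
  { eapply Rle_trans; [apply exp_lip|]. apply Rmult_le_compat; try apply Rabs_pos.
    - left; apply exp_pos.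
    - apply exp_le, Rmax_lub; apply Rmult_le_compat_l; auto.
    - rewrite <- Rmult_minus_distr_l, Rabs_mult, (Rabs_right alpha) by lra.
      apply Rmult_le_compat_l; auto. apply Rabs_triang_inv2. }
  assert (exp (alpha * Rabs s) * Rabs (u - v) <= exp (alpha * S) * Rabs (u - v))
    by (apply Rmult_le_compat_r; auto; apply Rabs_pos).
  assert (Rabs (exp (alpha * Rabs s) - exp (alpha * Rabs t)) * Rabs v
            <= exp (alpha * S) * (alpha * Rabs (s - t)) * C)
    by (apply Rmult_le_compat; auto; apply Rabs_pos).
  lra.
Qed.

Definition bounded_unif_cont {n} (Om : pt n -> Prop) (w : R -> pt n -> R) : Prop :=
  forall S eps, 0 < eps -> exists d, 0 < d /\ forall s t, Rabs s <= S -> Rabs t <= S ->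
    Rabs (s - t) < d -> forall x, Om x -> Rabs (w s x - w t x) <= eps.

Section BUCCurves.
Context {n : nat}.
Variable Om : pt n -> Prop.
Variable alpha : R.
Hypothesis Ha : 0 <= alpha.

Lemma supBUC_phibar phi c : supBUC_le Om alpha phi c ->
  forall s x, Om x -> Rabs (phibar phi s x) <= c * exp (alpha * Rabs s).
Proof.
  intros H s x Hx. rewrite phibar_Rmin.
  specialize (H (Rmin s 0) x (Rmin_r s 0) Hx).
  pose proof (Rabs_Rmin_0 s).
  assert (E1 : exp (alpha * Rabs (Rmin s 0)) <= exp (alpha * Rabs s)).
  { apply exp_le. apply Rmult_le_compat_l; auto. }
  rewrite (exp_unweight (alpha * Rabs (Rmin s 0)) (Rabs _)), Ropp_mult_distr_l.
  assert (0 <= exp (- alpha * Rabs (Rmin s 0)) * Rabs (phi (Rmin s 0) x)).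
  { apply Rmult_le_pos; [left; apply exp_pos | apply Rabs_pos]. }
  pose proof (exp_pos (alpha * Rabs (Rmin s 0))).
  apply Rle_trans with (exp (alpha * Rabs (Rmin s 0)) * c); [apply Rmult_le_compat_l; lra|].
  rewrite Rmult_comm. apply Rmult_le_compat_l; lra.
Qed.

Lemma supBUC_phibar_ball phi c Sb : supBUC_le Om alpha phi c ->
  forall s x, Rabs s <= Sb -> Om x -> Rabs (phibar phi s x) <= c * exp (alpha * Sb).
Proof.
  intros H s x Hs Hx. eapply Rle_trans; [apply (supBUC_phibar _ _ H s x Hx)|].
  assert (0 <= c).
  { pose proof (H 0 x ltac:(lra) Hx) as H0. rewrite Rabs_R0, Rmult_0_r, exp_0, Rmult_1_l in H0.
    pose proof (Rabs_pos (phi 0 x)). lra. }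
  apply Rmult_le_compat_l; auto. apply exp_le, Rmult_le_compat_l; auto.
Qed.

Lemma BUC_weighted_bound phi : BUC Om alpha phi ->
  exists C, 0 <= C /\ forall t x, t <= 0 -> Om x -> Rabs (exp (- alpha * Rabs t) * phi t x) <= C.
Proof.
  intros [_ [[c Hc] _]]. exists (Rmax c 0). split; [apply Rmax_r|].
  intros t x Ht Hx. rewrite Rabs_mult, (Rabs_right (exp _)) by (left; apply exp_pos).
  eapply Rle_trans; [apply Hc; auto| apply Rmax_l].
Qed.

Lemma BUC_bound phi : BUC Om alpha phi ->
  exists C, 0 <= C /\ forall s x, Om x -> Rabs (phibar phi s x) <= C * exp (alpha * Rabs s).
Proof.
  intros [_ [[c Hc] _]]. exists (Rmax c 0). split; [apply Rmax_r|].
  intros s x Hx. eapply Rle_trans; [apply (supBUC_phibar _ _ Hc s x Hx)|].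
  apply Rmult_le_compat_r; [left; apply exp_pos| apply Rmax_l].
Qed.

Lemma BUC_contC phi : BUC Om alpha phi -> forall s, contC Om (phibar phi s).
Proof. intros [H _] s. rewrite phibar_Rmin. apply H, Rmin_r. Qed.

Lemma BUC_unif_cont phi : BUC Om alpha phi -> bounded_unif_cont Om (phibar phi).
Proof.
  intros HB. pose proof HB as [_ [_ HU]].
  destruct (BUC_weighted_bound phi HB) as [C [HC Hw]].
  intros S eps He.
  set (E := exp (alpha * Rabs S)).
  assert (HE : 0 < E) by apply exp_pos.
  assert (HCE : 0 <= C * E * alpha) by (apply Rmult_le_pos; [apply Rmult_le_pos|]; lra).
  destruct (HU (eps / (2 * E))) as [d1 [Hd1 H1]]; [apply Rdiv_lt_0_compat; lra|].
  exists (Rmin d1 (eps / 2 / (C * E * alpha + 1))).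
  split; [apply Rmin_glb_lt; auto; apply Rdiv_lt_0_compat; lra|].
  intros s t Hs Ht Hst x Hx. rewrite !phibar_Rmin.
  pose proof (Rmin_0_dist s t). pose proof (Rabs_Rmin_0 s). pose proof (Rabs_Rmin_0 t).
  pose proof (Rle_abs S).
  specialize (H1 (Rmin s 0) (Rmin t 0) (Rmin_r s 0) (Rmin_r t 0)
     ltac:(pose proof (Rmin_l d1 (eps / 2 / (C * E * alpha + 1))); lra) x Hx).
  rewrite (exp_unweight (alpha * Rabs (Rmin s 0)) (phi (Rmin s 0) x)),
          (exp_unweight (alpha * Rabs (Rmin t 0)) (phi (Rmin t 0) x)), !Ropp_mult_distr_l.
  eapply Rle_trans; [apply (exp_weight_diff_le alpha (Rabs S) C); auto; try lra|].
  { apply Hw; auto. apply Rmin_r. }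
  fold E.
  assert (Hd2 : alpha * Rabs (Rmin s 0 - Rmin t 0) * C <= eps / 2 / E).
  { pose proof (Rmin_r d1 (eps / 2 / (C * E * alpha + 1))).
    apply (Rmult_le_reg_l E); auto.
    replace (E * (eps / 2 / E)) with (eps / 2) by (field; lra).
    left. eapply Rle_lt_trans; [|apply (Rmult_succ_div_lt (C * E * alpha) (eps / 2)); lra].
    replace (E * (alpha * Rabs (Rmin s 0 - Rmin t 0) * C)) with (C * E * alpha * Rabs (Rmin s 0 - Rmin t 0)) by ring.
    apply Rmult_le_compat_l; lra. }
  replace eps with (E * (eps / (2 * E) + eps / 2 / E)) by (field; lra).
  apply Rmult_le_compat_l; lra.
Qed.

End BUCCurves.

Section UnifContCurves.
Context {n : nat}.
Variable Om : pt n -> Prop.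
Variable w : R -> pt n -> R.
Hypothesis Hw_unif : bounded_unif_cont Om w.
Hypothesis Hw_cont : forall s, contC Om (w s).

Lemma unif_cont_continuity_pt x : Om x -> forall z, continuity_pt (fun s => w s x) z.
Proof.
  intros Hx z. apply continuity_pt_le_eps. intros eps He.
  destruct (Hw_unif (Rabs z + 1) eps He) as [d [Hd Hw]].
  exists (Rmin d 1). split; [apply Rmin_glb_lt; lra|].
  intros t Ht. apply Hw; auto.
  - pose proof (Rmin_r d 1). pose proof (Rabs_triang_inv t z). lra.
  - lra.
  - pose proof (Rmin_l d 1). lra.
Qed.

Lemma unif_cont_ex_RInt x : Om x -> forall a b, ex_RInt (fun s => w s x) a b.
Proof. intros Hx a b. apply ex_RInt_continuity. now apply unif_cont_continuity_pt. Qed.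

Lemma unif_cont_equicont Sb x0 : Om x0 -> forall eps, 0 < eps -> exists r, 0 < r /\
    forall x, Om x -> near x0 x r -> forall s, Rabs s <= Sb -> Rabs (w s x - w s x0) <= eps.
Proof.
  intros Hx0 eps He. apply NNPP. intro Hn.
  assert (HP : forall N : nat, exists s, -Sb <= s <= Sb /\
     exists x, Om x /\ near x0 x (/ INR (S N)) /\ eps < Rabs (w s x - w s x0)).
  { intro N. apply NNPP. intro H2. apply Hn. exists (/ INR (S N)). split; [apply inv_INR_S_pos|].
    intros x Hx Hnr s Hs. apply Rnot_lt_le. intro H3. apply H2. exists s. split.
    - now apply Rabs_le_between.
    - exists x; auto. }
  destruct (segment_cluster _ _ _ HP) as [ss [Hss Hcl]].
  destruct (Hw_unif Sb (eps / 3)) as [d [Hd Hw]]; [lra|].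
  destruct (Hw_cont ss x0 Hx0 (eps / 3)) as [r0 [Hr0 Hr0']]; [lra|].
  destruct (inv_INR_S_small r0 Hr0) as [N0 HN0].
  destruct (Hcl d Hd N0) as [N [s [HN [Hs [[x [Hx [Hnx Hgt]]] Hds]]]]].
  assert (Hss' : Rabs ss <= Sb) by (apply Rabs_le; lra).
  assert (Hs' : Rabs s <= Sb) by (apply Rabs_le; lra).
  pose proof (Hw s ss Hs' Hss' Hds x Hx) as A.
  pose proof (Hw s ss Hs' Hss' Hds x0 Hx0) as B.
  pose proof (Hr0' x Hx (near_mono _ _ _ _ Hnx (HN0 N HN))) as C.
  replace (w s x - w s x0) with ((w s x - w ss x) - (w s x0 - w ss x0) + (w ss x - w ss x0)) in Hgt by ring.
  pose proof (Rabs_triang (w s x - w ss x - (w s x0 - w ss x0)) (w ss x - w ss x0)).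
  pose proof (Rabs_triang_minus (w s x - w ss x) (w s x0 - w ss x0)).
  rewrite Rabs_minus_sym in C. lra.
Qed.

Lemma contC_RInt_curve tau Sb W :
  (forall s x, Rabs s <= Sb -> Om x -> Rabs (w s x) <= W) ->
  (forall x, Om x -> Rabs (tau x) <= Sb) -> contC Om tau ->
  contC Om (fun x => RInt (fun s => w s x) (- tau x) 0).
Proof.
  intros HW Ht Htc x0 Hx0 eps He.
  assert (S0 : 0 <= Sb) by (pose proof (Ht x0 Hx0); pose proof (Rabs_pos (tau x0)); lra).
  assert (W0 : 0 <= W) by (pose proof (HW 0 x0 ltac:(rewrite Rabs_R0; lra) Hx0); pose proof (Rabs_pos (w 0 x0)); lra).
  destruct (unif_cont_equicont Sb x0 Hx0 (eps / 2 / (Sb + 1))) as [r1 [Hr1 H1]].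
  { apply Rdiv_lt_0_compat; lra. }
  destruct (Htc x0 Hx0 (eps / 2 / (W + 1))) as [r2 [Hr2 H2]].
  { apply Rdiv_lt_0_compat; lra. }
  exists (Rmin r1 r2). split; [now apply Rmin_glb_lt|].
  intros x Hx Hn. specialize (H2 x Hx (near_Rmin_r _ _ _ _ Hn)).
  eapply Rle_lt_trans.
  { apply (RInt_to_zero_diff_le _ _ _ _ Sb W (eps / 2 / (Sb + 1)));
      try apply unif_cont_ex_RInt; auto.
    intros s Hs. rewrite Rabs_minus_sym. apply H1; auto. apply (near_Rmin_l _ _ _ _ Hn). }
  pose proof (Rmult_succ_div_lt W (eps / 2) W0 ltac:(lra)).
  pose proof (Rmult_succ_div_lt Sb (eps / 2) S0 ltac:(lra)).
  assert (Rabs (tau x0 - tau x) * W <= W * (eps / 2 / (W + 1))) by (rewrite Rmult_comm; apply Rmult_le_compat_l; lra).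
  lra.
Qed.

Lemma contC_curve_comp sg Sb : contC Om sg ->
  (forall x, Om x -> Rabs (sg x) <= Sb) -> contC Om (fun x => w (sg x) x).
Proof.
  intros Hs Hb x0 Hx0 eps He.
  destruct (unif_cont_equicont Sb x0 Hx0 (eps / 3)) as [r1 [Hr1 H1]]; [lra|].
  destruct (Hw_unif Sb (eps / 3)) as [d [Hd H2]]; [lra|].
  destruct (Hs x0 Hx0 d Hd) as [r2 [Hr2 H3]].
  exists (Rmin r1 r2). split; [apply Rmin_glb_lt; auto|]. intros x Hx Hn.
  specialize (H3 x Hx (near_Rmin_r _ _ _ _ Hn)).
  pose proof (H1 x Hx (near_Rmin_l _ _ _ _ Hn) (sg x) (Hb x Hx)) as A.
  pose proof (H2 (sg x0) (sg x) (Hb x0 Hx0) (Hb x Hx) H3 x0 Hx0) as B.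
  replace (w (sg x0) x0 - w (sg x) x) with ((w (sg x0) x0 - w (sg x) x0) - (w (sg x) x - w (sg x) x0)) by ring.
  eapply Rle_lt_trans; [apply Rabs_triang_minus|]. lra.
Qed.

End UnifContCurves.

(** * The equation defining [tauhat] *)

Section MonotoneMargin.
Context {n : nat}.
Variable Om : pt n -> Prop.

(* Dini-type argument: continuity in x and monotonicity in T make a pointwise
   positive margin uniform on the compact set. *)
Lemma compact_monotone_margin (F : R -> pt n -> R) : compact_set Om ->
  (forall T, contC Om (F T)) -> (forall T1 T2 x, Om x -> T1 <= T2 -> F T1 x <= F T2 x) ->
  (forall x, Om x -> exists T, 0 < F T x) ->
  exists T eta, 0 < eta /\ forall x, Om x -> eta <= F T x.
Proof.
  intros HC Hc Hmono Hpt. apply NNPP. intro Hn.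
  assert (HP : forall N : nat, exists x, Om x /\ F (INR N) x < / INR (S N)).
  { intro N. apply NNPP. intro H2. apply Hn. exists (INR N), (/ INR (S N)).
    split; [apply inv_INR_S_pos|].
    intros x Hx. apply Rnot_lt_le. intro H3. apply H2. exists x; split; auto. }
  destruct (compact_set_cluster _ HC _ HP) as [xs [Hxs Hcl]].
  destruct (Hpt xs Hxs) as [Ts HTs].
  destruct (Hc Ts xs Hxs (F Ts xs / 2)) as [r [Hr Hr']]; [lra|].
  destruct (INR_unbounded Ts) as [N1 HN1].
  destruct (inv_INR_S_small (F Ts xs / 2)) as [N2 HN2]; [lra|].
  destruct (Hcl r Hr (Nat.max N1 N2)) as [N [x [HN [Hx [HPx Hnx]]]]].
  specialize (Hr' x Hx Hnx).
  assert (INR N1 <= INR N) by (apply le_INR; lia).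
  specialize (HN2 N ltac:(lia)).
  assert (F Ts x <= F (INR N) x) by (apply Hmono; auto; lra).
  pose proof (Rle_abs (F Ts xs - F Ts x)). lra.
Qed.

End MonotoneMargin.

Definition f_along {n} (f : (pt n -> R) -> (pt n -> R)) (phi : R -> pt n -> R) (s : R) (x : pt n) : R :=
  f (phibar phi s) x.

(* [Phi phi tau x] is the left-hand side of the equation defining [tauhat]. *)
Definition Phi {n} (f : (pt n -> R) -> (pt n -> R)) (phi : R -> pt n -> R) (tau : R) (x : pt n) : R :=
  RInt (fun s => f_along f phi s x) (- tau) 0.

Definition dist_le {n} (Om : pt n -> Prop) (alpha : R) (q p : prodX n) (c : R) : Prop :=
  supBUC_le Om alpha (fun t y => fst q t y - fst p t y) c /\ supC_le Om (fun y => snd q y - snd p y) c.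

Section Tauhat.
Context {n : nat}.
Variable Om : pt n -> Prop.
Variable alpha Mf : R.
Variable f : (pt n -> R) -> (pt n -> R).
Hypothesis HC : compact_set Om.
Hypothesis Ha : 0 <= alpha.
Hypothesis Hfc : forall g, contC Om g -> contC Om (f g).
Hypothesis Hlip : lipschitzC Om f.
Hypothesis Hpos : forall g x, contC Om g -> Om x -> 0 < f g x <= Mf.
Hypothesis Hmono : forall g h, contC Om g -> contC Om h -> (forall x, Om x -> g x <= h x) ->
  forall x, Om x -> f h x <= f g x.

Lemma lipschitzC_nonneg : exists L, 0 <= L /\ forall g h, contC Om g -> contC Om h -> forall c,
  (forall x, Om x -> Rabs (g x - h x) <= c) -> forall x, Om x -> Rabs (f g x - f h x) <= L * c.
Proof.
  destruct Hlip as [L HL]. exists (Rmax L 0). split; [apply Rmax_r|].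
  intros g h Hg Hh c Hc x Hx.
  assert (c0 : 0 <= c) by (specialize (Hc x Hx); pose proof (Rabs_pos (g x - h x)); lra).
  eapply Rle_trans; [apply (HL g h Hg Hh c Hc x Hx)|].
  apply Rmult_le_compat_r; auto. apply Rmax_l.
Qed.

(* Monotonicity reduces the infimum over a ball to the value at a constant function. *)
Lemma f_lower_bound B : exists m, 0 < m /\ forall g, contC Om g ->
  (forall x, Om x -> Rabs (g x) <= B) -> forall x, Om x -> m <= f g x.
Proof.
  destruct (contC_pos_lower_bound Om (f (fun _ => B)) HC (Hfc _ (contC_const Om B))) as [m [Hm Hmin]].
  { intros x Hx. apply Hpos; auto. apply contC_const. }
  exists m; split; auto. intros g Hg HB x Hx.
  apply Rle_trans with (f (fun _ => B) x); [apply Hmin; auto|].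
  apply Hmono; auto. apply contC_const.
  intros y Hy. specialize (HB y Hy). pose proof (Rle_abs (g y)). lra.
Qed.

Lemma f_along_contC phi : BUC Om alpha phi -> forall s, contC Om (f_along f phi s).
Proof. intros HB s. apply Hfc, (BUC_contC Om alpha phi HB). Qed.

Lemma f_along_pos phi : BUC Om alpha phi -> forall s x, Om x -> 0 < f_along f phi s x <= Mf.
Proof. intros HB s x Hx. apply Hpos; auto. apply (BUC_contC Om alpha phi HB). Qed.

Lemma f_along_unif_cont phi : BUC Om alpha phi -> bounded_unif_cont Om (f_along f phi).
Proof.
  intros HB. destruct lipschitzC_nonneg as [L [HL0 HL]].
  intros S eps He.
  destruct (BUC_unif_cont Om alpha Ha phi HB S (eps / (L + 1))) as [d [Hd H]].
  { apply Rdiv_lt_0_compat; lra. }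
  exists d; split; auto. intros s t Hs Ht Hst x Hx. unfold f_along.
  eapply Rle_trans.
  - apply (HL _ _ (BUC_contC Om alpha phi HB s) (BUC_contC Om alpha phi HB t) (eps / (L + 1))); auto.
  - left. apply Rmult_succ_div_lt; auto.
Qed.

Lemma f_along_ex_RInt phi : BUC Om alpha phi -> forall x, Om x -> forall a b,
  ex_RInt (fun s => f_along f phi s x) a b.
Proof.
  intros HB x Hx. apply (unif_cont_ex_RInt Om); auto. now apply f_along_unif_cont.
Qed.

Lemma f_along_dist_le (q p : prodX n) c L : BUC Om alpha (fst q) -> BUC Om alpha (fst p) ->
  dist_le Om alpha q p c ->
  (forall g h, contC Om g -> contC Om h -> forall c,
     (forall x, Om x -> Rabs (g x - h x) <= c) -> forall x, Om x -> Rabs (f g x - f h x) <= L * c) ->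
  forall s x, Om x -> Rabs (f_along f (fst q) s x - f_along f (fst p) s x) <= L * (c * exp (alpha * Rabs s)).
Proof.
  intros Hq Hp [Hd _] HL s x Hx. unfold f_along.
  apply HL; auto; try apply (BUC_contC Om alpha); auto.
  intros y Hy. pose proof (supBUC_phibar Om alpha Ha _ c Hd s y Hy) as K.
  rewrite !phibar_Rmin in *. exact K.
Qed.

Lemma Phi_chasles phi t1 t2 x : BUC Om alpha phi -> Om x ->
  Phi f phi t1 x - Phi f phi t2 x = RInt (fun s => f_along f phi s x) (- t1) (- t2).
Proof.
  intros HB Hx. unfold Phi.
  rewrite <- (RInt_Chasles_R _ (- t1) (- t2) 0) by (apply f_along_ex_RInt; auto). ring.
Qed.

Lemma Phi_0 phi x : Phi f phi 0 x = 0.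
Proof. unfold Phi. rewrite Ropp_0. exact (RInt_point (V := R_CompleteNormedModule) 0 _). Qed.

Lemma Phi_increment_ge phi t1 t2 x m : BUC Om alpha phi -> Om x -> t1 <= t2 ->
  (forall s, - t2 <= s <= - t1 -> m <= f_along f phi s x) ->
  m * (t2 - t1) <= Phi f phi t2 x - Phi f phi t1 x.
Proof.
  intros HB Hx Ht Hm. rewrite Phi_chasles by auto.
  replace (m * (t2 - t1)) with ((- t1 - - t2) * m) by ring.
  apply RInt_ge_length; [lra| apply f_along_ex_RInt; auto| auto].
Qed.

Lemma Phi_mono phi t1 t2 x : BUC Om alpha phi -> Om x -> t1 <= t2 -> Phi f phi t1 x <= Phi f phi t2 x.
Proof.
  intros HB Hx Ht. pose proof (Phi_increment_ge phi t1 t2 x 0 HB Hx Ht) as H.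
  enough (0 * (t2 - t1) <= Phi f phi t2 x - Phi f phi t1 x) by lra.
  apply H. intros s _. left. now apply f_along_pos.
Qed.

Lemma Phi_increment_abs_ge phi t1 t2 x m Sb : BUC Om alpha phi -> Om x -> Rabs t1 <= Sb -> Rabs t2 <= Sb ->
  (forall s, Rabs s <= Sb -> m <= f_along f phi s x) ->
  m * Rabs (t2 - t1) <= Rabs (Phi f phi t2 x - Phi f phi t1 x).
Proof.
  intros HB Hx H1 H2 Hm.
  assert (Hseg : forall s, Rmin (- t1) (- t2) <= s <= Rmax (- t1) (- t2) -> m <= f_along f phi s x).
  { intros s Hs. apply Hm. apply (Rabs_le_segment (- t1) (- t2)); rewrite ?Rabs_Ropp; auto. }
  destruct (Rle_dec t1 t2).
  - rewrite Rabs_right by lra. eapply Rle_trans; [|apply Rle_abs].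
    apply Phi_increment_ge; auto. intros s Hs. apply Hseg.
    rewrite Rmin_right, Rmax_left; lra.
  - rewrite Rabs_left, (Rabs_minus_sym (Phi _ _ _ _)) by lra. eapply Rle_trans; [|apply Rle_abs].
    replace (- (t2 - t1)) with (t1 - t2) by ring.
    apply Phi_increment_ge; auto; try lra. intros s Hs. apply Hseg.
    rewrite Rmin_left, Rmax_right; lra.
Qed.

Lemma Phi_lipschitz phi t1 t2 x : BUC Om alpha phi -> Om x ->
  Rabs (Phi f phi t1 x - Phi f phi t2 x) <= Rabs (t1 - t2) * Mf.
Proof.
  intros HB Hx. rewrite Phi_chasles by auto.
  replace (Rabs (t1 - t2)) with (Rabs (- t2 - - t1)) by (f_equal; ring).
  apply abs_RInt_le_length; [apply f_along_ex_RInt; auto|]. intros s _.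
  pose proof (f_along_pos phi HB s x Hx). rewrite Rabs_right; lra.
Qed.

Lemma Phi_continuity phi x a : BUC Om alpha phi -> Om x -> continuity (fun t => Phi f phi t x - a).
Proof.
  intros HB Hx z. apply continuity_pt_le_eps. intros eps He.
  assert (HM : 0 < Mf) by (pose proof (f_along_pos phi HB 0 x Hx); lra).
  exists (eps / Mf). split; [apply Rdiv_lt_0_compat; lra|]. intros t Ht.
  replace (Phi f phi t x - a - (Phi f phi z x - a)) with (Phi f phi t x - Phi f phi z x) by ring.
  eapply Rle_trans; [apply Phi_lipschitz; auto|].
  apply Rle_trans with (eps / Mf * Mf); [apply Rmult_le_compat_r; lra | right; field; lra].
Qed.

Lemma Phi_contC phi T : BUC Om alpha phi -> contC Om (Phi f phi T).
Proof.
  intros HB.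
  apply (contC_RInt_curve Om (f_along f phi) (f_along_unif_cont phi HB) (f_along_contC phi HB)
           (fun _ => T) (Rabs T) Mf).
  - intros s x _ Hx. pose proof (f_along_pos phi HB s x Hx). rewrite Rabs_right; lra.
  - intros; lra.
  - apply contC_const.
Qed.

Lemma Phi_pos phi T x : BUC Om alpha phi -> Om x -> 0 < T -> 0 < Phi f phi T x.
Proof.
  intros HB Hx HT. apply RInt_gt_0; [lra| intros; now apply f_along_pos|].
  intros s _. apply continuity_pt_filterlim.
  apply (unif_cont_continuity_pt Om); auto. now apply f_along_unif_cont.
Qed.

(* Links the integral of [Dtau], whose integrand uses [phi] itself, with [Phi],
   whose integrand uses [phibar]: they agree on [s <= 0]. *)
Lemma Rint_Phi phi x T : BUC Om alpha phi -> Om x -> 0 <= T ->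
  Rint (fun s => f (phi s) x) (- T) 0 = Phi f phi T x.
Proof.
  intros HB Hx HT.
  assert (E : forall s, Rmin (- T) 0 < s < Rmax (- T) 0 -> f_along f phi s x = f (phi s) x).
  { intros s Hs. rewrite Rmax_right in Hs by lra. unfold f_along, phibar.
    destruct (Rle_dec s 0); [reflexivity| lra]. }
  rewrite Rint_RInt.
  - unfold Phi. symmetry. apply RInt_ext. exact E.
  - apply (ex_RInt_ext (fun s => f_along f phi s x)); [exact E| apply f_along_ex_RInt; auto].
Qed.

Lemma tauhat_Phi (q : prodX n) x : BUC Om alpha (fst q) -> Om x ->
  (exists t, Phi f (fst q) t x = snd q x) -> Phi f (fst q) (tauhat f q x) x = snd q x.
Proof.
  intros HB Hx [t Ht].
  assert (K : forall t, Rint (fun s => f (phibar (fst q) s) x) (- t) 0 = Phi f (fst q) t x).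
  { intro t0. rewrite Rint_RInt; [reflexivity|]. apply (f_along_ex_RInt (fst q) HB x Hx). }
  unfold tauhat. rewrite <- K. apply epsilon_spec. exists t. rewrite K. auto.
Qed.

Lemma tauhat_bracket (q : prodX n) x a b : BUC Om alpha (fst q) -> Om x -> a < b ->
  Phi f (fst q) a x < snd q x < Phi f (fst q) b x ->
  Phi f (fst q) (tauhat f q x) x = snd q x /\ a <= tauhat f q x <= b.
Proof.
  intros HB Hx Hab [Ha' Hb'].
  destruct (IVT (fun t => Phi f (fst q) t x - snd q x) a b (Phi_continuity _ _ _ HB Hx))
    as [z [Hz Hz']]; try lra.
  assert (E : Phi f (fst q) (tauhat f q x) x = snd q x) by (apply tauhat_Phi; auto; exists z; lra).
  split; auto. split; apply Rnot_lt_le; intro Hlt.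
  - assert (Phi f (fst q) (tauhat f q x) x <= Phi f (fst q) a x) by (apply Phi_mono; auto; lra). lra.
  - assert (Phi f (fst q) b x <= Phi f (fst q) (tauhat f q x) x) by (apply Phi_mono; auto; lra). lra.
Qed.

Lemma Phi_dist_le (q p : prodX n) c tau x L Sb : BUC Om alpha (fst q) -> BUC Om alpha (fst p) -> Om x ->
  0 <= L * c ->
  (forall s, Rabs s <= Sb -> Rabs (f_along f (fst q) s x - f_along f (fst p) s x) <= L * (c * exp (alpha * Rabs s))) ->
  Rabs tau <= Sb ->
  Rabs (Phi f (fst q) tau x - Phi f (fst p) tau x) <= Sb * (L * (c * exp (alpha * Sb))).
Proof.
  intros Hq Hp Hx HLc HL Ht. unfold Phi. rewrite <- RInt_minus_R by (apply f_along_ex_RInt; auto).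
  apply abs_RInt_to_zero_le; auto.
  - apply ex_RInt_minus_R; apply f_along_ex_RInt; auto.
  - intros s Hs. eapply Rle_trans; [apply HL; auto|].
    rewrite <- !Rmult_assoc. apply Rmult_le_compat_l; auto.
    apply exp_le, Rmult_le_compat_l; auto.
Qed.

Lemma Dtau_uniform_margin (p : prodX n) : Dtau Om alpha f p ->
  exists T eta, 0 <= T /\ 0 < eta /\ forall x, Om x -> snd p x + eta <= Phi f (fst p) T x.
Proof.
  intros [[HB Hdc] HD].
  destruct (compact_monotone_margin Om (fun T x => Phi f (fst p) (Rmax T 0) x - snd p x) HC)
    as [T [eta [Heta HT]]].
  - intro T. apply contC_minus; auto. now apply Phi_contC.
  - intros T1 T2 x Hx H12. apply Rplus_le_compat_r, Phi_mono; auto.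
    apply Rle_max_compat_r; auto.
  - intros x Hx. destruct (Rlt_dec 0 (snd p x)) as [Hp|Hp].
    + destruct (HD x Hx Hp) as [T0 [HT0 HT0']]. exists T0.
      rewrite Rint_Phi in HT0' by auto. rewrite Rmax_left by lra. lra.
    + exists 1. rewrite Rmax_left by lra. pose proof (Phi_pos (fst p) 1 x HB Hx). lra.
  - exists (Rmax T 0), eta. split; [apply Rmax_r|]. split; auto.
    intros x Hx. pose proof (HT x Hx). lra.
Qed.

Lemma dist_le_refl (p : prodX n) : dist_le Om alpha p p 0.
Proof.
  split.
  - intros t x _ _. rewrite Rminus_diag, Rabs_R0, Rmult_0_r. lra.
  - intros x _. rewrite Rminus_diag, Rabs_R0. lra.
Qed.

Lemma dist_le_phibar (q p : prodX n) c : dist_le Om alpha q p c -> forall s x, Om x ->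
  Rabs (phibar (fst q) s x - phibar (fst p) s x) <= c * exp (alpha * Rabs s).
Proof.
  intros [H _] s x Hx. pose proof (supBUC_phibar Om alpha Ha _ c H s x Hx) as K.
  rewrite !phibar_Rmin in *. exact K.
Qed.

Lemma dist_le_nonneg (q p : prodX n) c x : dist_le Om alpha q p c -> Om x -> 0 <= c.
Proof. intros [_ H] Hx. pose proof (H x Hx). pose proof (Rabs_pos (snd q x - snd p x)). lra. Qed.

Record local_solution (p q : prodX n) (c Sb m L : R) : Prop := {
  ls_Dtau : Dtau Om alpha f q;
  ls_lower : forall s x, Rabs s <= Sb -> Om x -> m <= f_along f (fst q) s x;
  ls_f_along : forall s x, Om x ->
    Rabs (f_along f (fst q) s x - f_along f (fst p) s x) <= L * (c * exp (alpha * Rabs s));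
  ls_solves : forall x, Om x -> Phi f (fst q) (tauhat f q x) x = snd q x;
  ls_bound : forall x, Om x -> Rabs (tauhat f q x) <= Sb }.

Arguments ls_Dtau {p q c Sb m L}.
Arguments ls_lower {p q c Sb m L}.
Arguments ls_f_along {p q c Sb m L}.
Arguments ls_solves {p q c Sb m L}.
Arguments ls_bound {p q c Sb m L}.

Lemma dist_le_curve_bound (q p : prodX n) c C : dist_le Om alpha q p c -> c <= 1 ->
  (forall s x, Om x -> Rabs (phibar (fst p) s x) <= C * exp (alpha * Rabs s)) ->
  forall s x, Om x -> Rabs (phibar (fst q) s x) <= (C + 1) * exp (alpha * Rabs s).
Proof.
  intros Hd Hc1 HC' s x Hx. pose proof (dist_le_phibar q p c Hd s x Hx). pose proof (HC' s x Hx).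
  pose proof (Rabs_triang_inv (phibar (fst q) s x) (phibar (fst p) s x)).
  pose proof (exp_pos (alpha * Rabs s)). nra.
Qed.

Lemma Phi_neg_le phi T x m0 : BUC Om alpha phi -> Om x -> 0 <= T ->
  (forall s, 0 <= s <= T -> m0 <= f_along f phi s x) -> Phi f phi (- T) x <= - (m0 * T).
Proof.
  intros HB Hx HT Hm. pose proof (Phi_increment_ge phi (- T) 0 x m0 HB Hx ltac:(lra)) as H.
  rewrite Phi_0 in H. enough (m0 * (0 - - T) <= 0 - Phi f phi (- T) x) by lra.
  apply H. intros s Hs. apply Hm. lra.
Qed.

Lemma Phi_upper_bracket (q p : prodX n) c T L eta : BUC Om alpha (fst q) -> BUC Om alpha (fst p) ->
  dist_le Om alpha q p c -> 0 <= T -> 0 <= L -> 0 < eta ->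
  (forall s x, Om x -> Rabs (f_along f (fst q) s x - f_along f (fst p) s x) <= L * (c * exp (alpha * Rabs s))) ->
  c * (T * (L * exp (alpha * T)) + 1) <= eta / 2 ->
  (forall x, Om x -> snd p x + eta <= Phi f (fst p) T x) ->
  forall x, Om x -> snd q x < Phi f (fst q) T x.
Proof.
  intros HBq HBp Hd HT HL Heta Hkd Hc HUT x Hx. pose proof (dist_le_nonneg q p c x Hd Hx).
  assert (Hdx : Rabs (snd q x - snd p x) <= c) by (apply (proj2 Hd); auto).
  assert (HPhi : Rabs (Phi f (fst q) T x - Phi f (fst p) T x) <= c * (T * (L * exp (alpha * T)))).
  { replace (c * (T * (L * exp (alpha * T)))) with (T * (L * (c * exp (alpha * T)))) by ring.
    apply Phi_dist_le; auto; [nra | rewrite Rabs_right; lra]. }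
  pose proof (HUT x Hx). apply Rabs_le_between in Hdx. apply Rabs_le_between in HPhi. lra.
Qed.

(* Near [p], [tauhat] is squeezed between the time [T] given by the uniform
   margin and a negative time [-T'] given by the positive lower bound of [f]. *)
Lemma Dtau_local_solution (p : prodX n) : Dtau Om alpha f p -> exists Sb m L d0,
  0 <= Sb /\ 0 < m /\ 0 <= L /\ 0 < d0 /\
  forall q c, memP Om alpha q -> dist_le Om alpha q p c -> c < d0 -> local_solution p q c Sb m L.
Proof.
  intros HD. pose proof HD as [[HBp Hdp] _].
  destruct (Dtau_uniform_margin p HD) as [T [eta [HT [Heta HUT]]]].
  destruct (contC_bounded Om (snd p) HC Hdp) as [Bd [HBd0 HBd]].
  destruct (BUC_bound Om alpha Ha _ HBp) as [Cp [HCp HCpb]].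
  destruct (f_lower_bound (Cp + 1)) as [m0 [Hm0 Hm0l]].
  set (T' := (Bd + 2) / m0).
  assert (HT' : 0 < T') by (apply Rdiv_lt_0_compat; lra).
  destruct (f_lower_bound ((Cp + 1) * exp (alpha * (T + T')))) as [m [Hm Hml]].
  destruct lipschitzC_nonneg as [L [HL0 HL]].
  set (K := T * (L * exp (alpha * T))).
  assert (HK : 0 <= K) by (apply Rmult_le_pos; [lra|]; apply Rmult_le_pos; [lra|left; apply exp_pos]).
  exists (T + T'), m, L, (Rmin 1 (eta / 2 / (K + 1))).
  do 3 (split; [auto; lra|]). split; [apply Rmin_glb_lt; [lra| apply Rdiv_lt_0_compat; lra]|].
  intros q c [HBq Hdq] Hd Hc.
  pose proof (Rmin_l 1 (eta / 2 / (K + 1))). pose proof (Rmin_r 1 (eta / 2 / (K + 1))).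
  pose proof (dist_le_curve_bound q p c Cp Hd ltac:(lra) HCpb) as Hcb.
  assert (Hkd := f_along_dist_le q p c L HBq HBp Hd HL).
  assert (Hupper : forall x, Om x -> snd q x < Phi f (fst q) T x).
  { apply (Phi_upper_bracket q p c T L eta); auto.
    replace (eta / 2) with (eta / 2 / (K + 1) * (K + 1)) by (field; lra).
    apply Rmult_le_compat_r; lra. }
  assert (Hlower : forall x, Om x -> Phi f (fst q) (- T') x < snd q x).
  { intros x Hx. eapply Rle_lt_trans; [apply (Phi_neg_le _ _ _ m0); auto; try lra|].
    - intros s Hs. apply Hm0l; [apply (BUC_contC Om alpha); auto| |auto].
      intros y Hy. rewrite phibar_Rmin, Rmin_right, <- (Rmin_right 0 0), <- phibar_Rmin by lra.
      pose proof (Hcb 0 y Hy) as Hy0. rewrite Rabs_R0, Rmult_0_r, exp_0, Rmult_1_r in Hy0. exact Hy0.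
    - replace (m0 * T') with (Bd + 2) by (unfold T'; field; lra).
      assert (Hdx : Rabs (snd q x - snd p x) <= c) by (apply (proj2 Hd); auto).
      pose proof (dist_le_nonneg q p c x Hd Hx). pose proof (HBd x Hx) as Hbx.
      apply Rabs_le_between in Hdx. apply Rabs_le_between in Hbx. lra. }
  assert (Hsol : forall x, Om x -> Phi f (fst q) (tauhat f q x) x = snd q x /\ - T' <= tauhat f q x <= T).
  { intros x Hx. apply tauhat_bracket; auto; lra. }
  constructor; auto.
  - split; [split; auto|]. intros x Hx _. exists T. split; [lra|]. rewrite Rint_Phi by auto. now apply Hupper.
  - intros s x Hs Hx. apply Hml; [apply (BUC_contC Om alpha); auto| |auto].
    intros y Hy. eapply Rle_trans; [apply Hcb; auto|]. apply Rmult_le_compat_l; [lra|].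
    apply exp_le, Rmult_le_compat_l; auto.
  - intros x Hx. now apply Hsol.
  - intros x Hx. destruct (Hsol x Hx) as [_ Hb]. apply Rabs_le. lra.
Qed.

Lemma tauhat_dist_le (p q : prodX n) c Sb m L x : BUC Om alpha (fst q) -> BUC Om alpha (fst p) -> Om x ->
  0 < m -> 0 <= L -> dist_le Om alpha q p c ->
  local_solution p q c Sb m L -> local_solution p p 0 Sb m L ->
  Rabs (tauhat f q x - tauhat f p x) <= (1 + Sb * (L * exp (alpha * Sb))) / m * c.
Proof.
  intros HBq HBp Hx Hm HL Hd Hq Hp. pose proof (dist_le_nonneg q p c x Hd Hx).
  pose proof (Phi_increment_abs_ge (fst q) (tauhat f p x) (tauhat f q x) x m Sb HBq Hx
     (ls_bound Hp x Hx) (ls_bound Hq x Hx)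
     (fun s Hs => ls_lower Hq s x Hs Hx)) as Hrate.
  rewrite (ls_solves Hq x Hx) in Hrate.
  assert (HPhi : Rabs (Phi f (fst q) (tauhat f p x) x - snd p x) <= Sb * (L * (c * exp (alpha * Sb)))).
  { rewrite <- (ls_solves Hp x Hx).
    apply Phi_dist_le; auto; [nra| |apply (ls_bound Hp x Hx)].
    intros s _. apply (ls_f_along Hq); auto. }
  assert (Hdx : Rabs (snd q x - snd p x) <= c) by (apply (proj2 Hd); auto).
  apply (Rmult_le_reg_l m); auto.
  replace (m * ((1 + Sb * (L * exp (alpha * Sb))) / m * c)) with (c + Sb * (L * (c * exp (alpha * Sb))))
    by (field; lra).
  eapply Rle_trans; [apply Hrate|].
  replace (snd q x - Phi f (fst q) (tauhat f p x) x)
    with ((snd q x - snd p x) - (Phi f (fst q) (tauhat f p x) x - snd p x)) by ring.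
  eapply Rle_trans; [apply Rabs_triang_minus|]. lra.
Qed.

(* On the ball of radius [d0] around [p]: [Sb] bounds the times involved, [m] bounds the
   rate of [Phi] from below, and [L], [K1] are Lipschitz constants of [f] and [tauhat]. *)
Record tau_control (p : prodX n) (Sb m L K1 d0 : R) : Prop := {
  tc_Sb : 0 <= Sb;
  tc_m : 0 < m;
  tc_L : 0 <= L;
  tc_K1 : 0 <= K1;
  tc_d0 : 0 < d0;
  tc_solution : forall q c, memP Om alpha q -> dist_le Om alpha q p c -> c < d0 ->
    local_solution p q c Sb m L;
  tc_tauhat : forall q c, memP Om alpha q -> dist_le Om alpha q p c -> c < d0 ->
    forall x, Om x -> Rabs (tauhat f q x - tauhat f p x) <= K1 * c }.

Arguments tc_m {p Sb m L K1 d0}.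
Arguments tc_K1 {p Sb m L K1 d0}.
Arguments tc_d0 {p Sb m L K1 d0}.
Arguments tc_solution {p Sb m L K1 d0}.
Arguments tc_tauhat {p Sb m L K1 d0}.

Lemma tau_control_tauhat_lt (p q : prodX n) Sb m L K1 d0 c r : tau_control p Sb m L K1 d0 ->
  memP Om alpha q -> dist_le Om alpha q p c -> c < d0 -> c < r / (K1 + 1) ->
  forall x, Om x -> Rabs (tauhat f q x - tauhat f p x) < r.
Proof.
  intros Hctl Hq Hd Hc0 Hcr x Hx. pose proof (tc_K1 Hctl).
  pose proof (dist_le_nonneg q p c x Hd Hx).
  eapply Rle_lt_trans; [apply (tc_tauhat Hctl q c); auto|].
  apply Rle_lt_trans with ((K1 + 1) * c); [nra|].
  apply (Rmult_lt_compat_l (K1 + 1)) in Hcr; [|lra]. replace ((K1 + 1) * (r / (K1 + 1))) with r in Hcr by (field; lra).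
  exact Hcr.
Qed.

Lemma tau_control_self {p : prodX n} {Sb m L K1 d0} : Dtau Om alpha f p ->
  tau_control p Sb m L K1 d0 -> local_solution p p 0 Sb m L.
Proof.
  intros [Hp _] Hc. apply (tc_solution Hc); auto using dist_le_refl.
  apply (tc_d0 Hc).
Qed.

Lemma Dtau_tau_control (p : prodX n) : Dtau Om alpha f p ->
  exists Sb m L K1 d0, tau_control p Sb m L K1 d0.
Proof.
  intros HD. destruct (Dtau_local_solution p HD) as (Sb & m & L & d0 & HSb & Hm & HL & Hd0 & Hsol).
  pose proof HD as [[HBp _] _].
  assert (Hp : local_solution p p 0 Sb m L) by (apply Hsol; auto using dist_le_refl; apply HD).
  exists Sb, m, L, ((1 + Sb * (L * exp (alpha * Sb))) / m), d0. constructor; auto.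
  - apply Rdiv_le_0_compat; auto. pose proof (exp_pos (alpha * Sb)).
    assert (0 <= Sb * (L * exp (alpha * Sb))) by (apply Rmult_le_pos; auto; nra). lra.
  - intros q c Hq Hd Hc x Hx. apply (tauhat_dist_le p q c Sb m L); auto; apply Hq.
Qed.

(* Continuity at [x0] comes from that of [x |-> snd p x - Phi (fst p) (tauhat p x0) x],
   which vanishes at [x0], through the lower bound on the rate of [Phi]. *)
Lemma tauhat_contC (p : prodX n) : Dtau Om alpha f p -> contC Om (tauhat f p).
Proof.
  intros HD. destruct (Dtau_tau_control p HD) as (Sb & m & L & K1 & d0 & Hctl).
  pose proof (tau_control_self HD Hctl) as Hp.
  pose proof HD as [[HBp Hdp] _]. pose proof (tc_m Hctl) as Hm.
  intros x0 Hx0 eps He.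
  assert (Hc : contC Om (fun x => snd p x - Phi f (fst p) (tauhat f p x0) x)) by (apply contC_minus; auto; now apply Phi_contC).
  destruct (Hc x0 Hx0 (m * eps)) as [r [Hr Hr']]; [apply Rmult_lt_0_compat; lra|].
  exists r; split; auto. intros x Hx Hn. specialize (Hr' x Hx Hn).
  pose proof (Phi_increment_abs_ge (fst p) (tauhat f p x0) (tauhat f p x) x m Sb HBp Hx
     (ls_bound Hp x0 Hx0) (ls_bound Hp x Hx)
     (fun s Hs => ls_lower Hp s x Hs Hx)) as Hrate.
  rewrite (ls_solves Hp x Hx) in Hrate.
  rewrite (ls_solves Hp x0 Hx0), Rminus_diag, Rminus_0_l, Rabs_Ropp in Hr'.
  rewrite Rabs_minus_sym. apply (Rmult_lt_reg_l m); auto. lra.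
Qed.

(** * Differentiability of [tauhat] *)

Variable Df : (pt n -> R) -> (pt n -> R) -> (pt n -> R).
Hypothesis HDf : C1_map Om (contC Om) (supC_le Om) addF scalF (contC Om) f Df.

Lemma Df_contC g h : contC Om g -> contC Om h -> contC Om (Df g h).
Proof. destruct HDf as [_ [H _]]. intros; apply H; auto. Qed.

Lemma Df_lin g h1 h2 a b : contC Om g -> contC Om h1 -> contC Om h2 -> forall x, Om x ->
  Df g (fun y => a * h1 y + b * h2 y) x = a * Df g h1 x + b * Df g h2 x.
Proof. destruct HDf as [_ [_ [H _]]]. intros. apply (H g); auto. Qed.

Lemma Df_scal g h a : contC Om g -> contC Om h -> forall x, Om x ->
  Df g (fun y => a * h y) x = a * Df g h x.
Proof.
  intros Hg Hh x Hx.
  replace (fun y => a * h y) with (fun y => a * h y + 0 * h y) by (apply functional_extensionality; intro; ring).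
  rewrite Df_lin; auto. ring.
Qed.

Lemma Df_minus g h1 h2 : contC Om g -> contC Om h1 -> contC Om h2 -> forall x, Om x ->
  Df g (fun y => h1 y - h2 y) x = Df g h1 x - Df g h2 x.
Proof.
  intros Hg H1 H2 x Hx.
  replace (fun y => h1 y - h2 y) with (fun y => 1 * h1 y + (-1) * h2 y) by (apply functional_extensionality; intro; ring).
  rewrite Df_lin; auto. ring.
Qed.

Lemma Df_bounded g : contC Om g -> exists K, 0 <= K /\ forall h c, contC Om h ->
  (forall y, Om y -> Rabs (h y) <= c) -> forall x, Om x -> Rabs (Df g h x) <= K * c.
Proof.
  destruct HDf as [_ [_ [_ [H _]]]]. intros Hg. destruct (H g Hg) as [K HK].
  exists (Rmax K 0). split; [apply Rmax_r|]. intros h c Hh Hc x Hx.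
  assert (0 <= c) by (pose proof (Hc x Hx); pose proof (Rabs_pos (h x)); lra).
  eapply Rle_trans; [apply (HK h c Hh Hc x Hx)|]. apply Rmult_le_compat_r; auto. apply Rmax_l.
Qed.

Lemma Df_frechet g : contC Om g -> forall eps, 0 < eps -> exists d, 0 < d /\
  forall h c, contC Om h -> (forall y, Om y -> Rabs (h y) <= c) -> c < d ->
  forall x, Om x -> Rabs (f (fun y => g y + h y) x - f g x - Df g h x) <= eps * c.
Proof.
  destruct HDf as [_ [_ [_ [_ [H _]]]]]. intros Hg eps He. destruct (H g Hg eps He) as [d [Hd Hd']].
  exists d; split; auto. intros h c Hh Hc Hcd x Hx. apply (Hd' h c Hh); auto.
  apply contC_plus; auto.
Qed.

Lemma Df_op_cont g : contC Om g -> forall eps, 0 < eps -> exists d, 0 < d /\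
  forall k, contC Om k -> (forall y, Om y -> Rabs (k y - g y) <= d) ->
  forall h c, contC Om h -> (forall y, Om y -> Rabs (h y) <= c) ->
  forall x, Om x -> Rabs (Df k h x - Df g h x) <= eps * c.
Proof.
  destruct HDf as [_ [_ [_ [_ [_ H]]]]]. intros Hg eps He. destruct (H g Hg eps He) as [d [Hd Hd']].
  exists (d / 2); split; [lra|]. intros k Hk Hkg h c Hh Hc x Hx. apply (Hd' k Hk); auto.
  exists (d / 2). split; [lra|]. intros y Hy. unfold addF, scalF.
  replace (k y + -1 * g y) with (k y - g y) by ring. auto.
Qed.

Section AlongCurve.
Variable G : R -> pt n -> R.
Hypothesis HG_unif : bounded_unif_cont Om G.
Hypothesis HG_cont : forall s, contC Om (G s).

(* Compactness of [-Sb, Sb] upgrades the pointwise operator continuity of [Df]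
   to uniform continuity along the curve [G]. *)
Lemma Df_op_cont_along Sb eps : 0 < eps -> exists d, 0 < d /\
  forall s, Rabs s <= Sb -> forall k, contC Om k -> (forall y, Om y -> Rabs (k y - G s y) <= d) ->
  forall h c, contC Om h -> (forall y, Om y -> Rabs (h y) <= c) ->
  forall x, Om x -> Rabs (Df k h x - Df (G s) h x) <= eps * c.
Proof.
  intros He. apply NNPP. intro Hn.
  assert (HP : forall N : nat, exists s, - Sb <= s <= Sb /\ exists k h c x, contC Om k /\
     (forall y, Om y -> Rabs (k y - G s y) <= / INR (S N)) /\ contC Om h /\
     (forall y, Om y -> Rabs (h y) <= c) /\ Om x /\ eps * c < Rabs (Df k h x - Df (G s) h x)).
  { intro N. apply NNPP. intro H2. apply Hn. exists (/ INR (S N)). split; [apply inv_INR_S_pos|].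
    intros s Hs k Hk Hkd h c Hh Hc x Hx. apply Rnot_lt_le. intro H3. apply H2. exists s.
    split; [now apply Rabs_le_between|]. exists k, h, c, x. repeat split; auto. }
  destruct (segment_cluster _ _ _ HP) as [ss [Hss Hcl]].
  destruct (Df_op_cont (G ss) (HG_cont ss) (eps / 2)) as [d [Hd Hd']]; [lra|].
  destruct (HG_unif Sb (d / 2)) as [d1 [Hd1 Hd1']]; [lra|].
  destruct (inv_INR_S_small (d / 2)) as [N0 HN0]; [lra|].
  destruct (Hcl d1 Hd1 N0) as [N [s [HN [Hs [[k [h [c [x [Hk [Hkd [Hh [Hc [Hx Hgt]]]]]]]]] Hds]]]]].
  assert (Hs' : Rabs s <= Sb) by (apply Rabs_le; lra).
  assert (Hss' : Rabs ss <= Sb) by (apply Rabs_le; lra).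
  assert (HGs : forall y, Om y -> Rabs (G s y - G ss y) <= d).
  { intros y Hy. pose proof (Hd1' s ss Hs' Hss' Hds y Hy). lra. }
  assert (Hkss : forall y, Om y -> Rabs (k y - G ss y) <= d).
  { intros y Hy. pose proof (Hkd y Hy). pose proof (HN0 N HN). pose proof (Hd1' s ss Hs' Hss' Hds y Hy).
    replace (k y - G ss y) with ((k y - G s y) + (G s y - G ss y)) by ring.
    eapply Rle_trans; [apply Rabs_triang|]. lra. }
  pose proof (Hd' k Hk Hkss h c Hh Hc x Hx) as A.
  pose proof (Hd' (G s) (HG_cont s) HGs h c Hh Hc x Hx) as B.
  replace (Df k h x - Df (G s) h x) with ((Df k h x - Df (G ss) h x) - (Df (G s) h x - Df (G ss) h x)) in Hgt by ring.
  pose proof (Rabs_triang_minus (Df k h x - Df (G ss) h x) (Df (G s) h x - Df (G ss) h x)). lra.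
Qed.

Lemma Df_bounded_along Sb : exists K, 0 <= K /\
  forall s, Rabs s <= Sb -> forall h c, contC Om h -> (forall y, Om y -> Rabs (h y) <= c) ->
  forall x, Om x -> Rabs (Df (G s) h x) <= K * c.
Proof.
  apply NNPP. intro Hn.
  assert (HP : forall N : nat, exists s, - Sb <= s <= Sb /\ exists h c x, contC Om h /\
     (forall y, Om y -> Rabs (h y) <= c) /\ Om x /\ INR N * c < Rabs (Df (G s) h x)).
  { intro N. apply NNPP. intro H2. apply Hn. exists (INR N). split; [apply pos_INR|].
    intros s Hs h c Hh Hc x Hx. apply Rnot_lt_le. intro H3. apply H2. exists s.
    split; [now apply Rabs_le_between|]. exists h, c, x. repeat split; auto. }
  destruct (segment_cluster _ _ _ HP) as [ss [Hss Hcl]].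
  destruct (Df_op_cont_along Sb 1) as [d [Hd Hd']]; [lra|].
  destruct (Df_bounded (G ss) (HG_cont ss)) as [K0 [HK0 HK0']].
  destruct (HG_unif Sb d) as [d1 [Hd1 Hd1']]; auto.
  destruct (INR_unbounded (K0 + 1)) as [N0 HN0].
  destruct (Hcl d1 Hd1 N0) as [N [s [HN [Hs [[h [c [x [Hh [Hc [Hx Hgt]]]]]] Hds]]]]].
  assert (Hs' : Rabs s <= Sb) by (apply Rabs_le; lra).
  assert (Hss' : Rabs ss <= Sb) by (apply Rabs_le; lra).
  assert (c0 : 0 <= c) by (pose proof (Hc x Hx); pose proof (Rabs_pos (h x)); lra).
  pose proof (Hd' ss Hss' (G s) (HG_cont s) (fun y Hy => Hd1' s ss Hs' Hss' Hds y Hy) h c Hh Hc x Hx) as A.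
  pose proof (HK0' h c Hh Hc x Hx) as B.
  assert (INR N0 <= INR N) by (apply le_INR; auto).
  pose proof (Rabs_triang_inv (Df (G s) h x) (Df (G ss) h x)).
  assert ((K0 + 1) * c <= INR N * c) by (apply Rmult_le_compat_r; lra).
  lra.
Qed.

End AlongCurve.

Lemma Df_derivable_line g k x t0 : contC Om g -> contC Om k -> Om x ->
  derivable_pt_lim (fun t => f (fun y => g y + t * k y) x) t0 (Df (fun y => g y + t0 * k y) k x).
Proof.
  intros Hg Hk Hx.
  set (gt := fun y => g y + t0 * k y).
  assert (Hgt : contC Om gt) by (apply contC_plus; [auto| apply contC_scal; auto]).
  destruct (contC_bounded Om k HC Hk) as [B [HB0 HB]].
  intros eps He.
  destruct (Df_frechet gt Hgt (eps / (B + 1))) as [d [Hd Hd']]; [apply Rdiv_lt_0_compat; lra|].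
  assert (Hdp : 0 < d / (B + 1)) by (apply Rdiv_lt_0_compat; lra).
  exists (mkposreal _ Hdp). intros e He0 Hed. simpl in Hed.
  assert (Hae : 0 < Rabs e) by (apply Rabs_pos_lt; auto).
  assert (Hhb : forall y, Om y -> Rabs (e * k y) <= Rabs e * B).
  { intros y Hy. rewrite Rabs_mult. apply Rmult_le_compat_l; [apply Rabs_pos| auto]. }
  assert (Hlt : Rabs e * B < d).
  { apply Rle_lt_trans with (Rabs e * (B + 1)); [apply Rmult_le_compat_l; lra|].
    apply (Rmult_lt_compat_r (B + 1)) in Hed; [|lra].
    replace (d / (B + 1) * (B + 1)) with d in Hed by (field; lra). lra. }
  pose proof (Hd' (fun y => e * k y) (Rabs e * B) ltac:(now apply contC_scal) Hhb Hlt x Hx) as Hrem.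
  assert (Hfun : (fun y => gt y + e * k y) = (fun y => g y + (t0 + e) * k y))
    by (apply functional_extensionality; intro y; unfold gt; ring).
  cbv beta in Hrem. rewrite Hfun in Hrem.
  rewrite Df_scal in Hrem by auto. fold gt. simpl. fold gt.
  match goal with |- Rabs ?A < _ =>
    replace A with ((f (fun y => g y + (t0 + e) * k y) x - f gt x - e * Df gt k x) / e)
    by (unfold gt; field; auto) end.
  unfold Rdiv. rewrite Rabs_mult, Rabs_inv.
  apply Rle_lt_trans with (eps / (B + 1) * (Rabs e * B) * / Rabs e).
  { apply Rmult_le_compat_r; [left; apply Rinv_0_lt_compat; auto| auto]. }
  replace (eps / (B + 1) * (Rabs e * B) * / Rabs e) with (B * (eps / (B + 1))) by (field; lra).
  now apply Rmult_succ_div_lt.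
Qed.

(* Mean value theorem along the segment [G s, G s + k], combined with the uniform
   continuity of [Df] along [G]. *)
Lemma Df_frechet_along G : bounded_unif_cont Om G -> (forall s, contC Om (G s)) ->
  forall Sb eps, 0 < eps -> exists d, 0 < d /\
  forall s, Rabs s <= Sb -> forall k c, contC Om k -> (forall y, Om y -> Rabs (k y) <= c) -> c <= d ->
  forall x, Om x -> Rabs (f (fun y => G s y + k y) x - f (G s) x - Df (G s) k x) <= eps * c.
Proof.
  intros HU HG Sb eps He. destruct (Df_op_cont_along G HU HG Sb eps He) as [d [Hd Hd']].
  exists d; split; auto. intros s Hs k c Hk Hc Hcd x Hx.
  set (u := fun t => f (fun y => G s y + t * k y) x).
  destruct (MVT_gen u 0 1 (fun t => Df (fun y => G s y + t * k y) k x)) as [th [Hth E]].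
  - intros t _. apply is_derive_Reals. apply Df_derivable_line; auto.
  - intros t _. apply derivable_continuous_pt. exists (Df (fun y => G s y + t * k y) k x).
    apply Df_derivable_line; auto.
  - rewrite Rmin_left, Rmax_right in Hth by lra.
    assert (U1 : u 1 = f (fun y => G s y + k y) x).
    { unfold u. f_equal. apply functional_extensionality; intro; ring. }
    assert (U0 : u 0 = f (G s) x).
    { unfold u. f_equal. apply functional_extensionality; intro; ring. }
    rewrite <- U1, <- U0, E, Rminus_0_r, Rmult_1_r.
    apply (Hd' s Hs); auto.
    + apply contC_plus; [auto| apply contC_scal; auto].
    + intros y Hy. replace (G s y + th * k y - G s y) with (th * k y) by ring.
      rewrite Rabs_mult, (Rabs_right th) by lra.
      apply Rle_trans with (1 * c); [|lra]. apply Rmult_le_compat; try lra; try apply Rabs_pos; auto.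
Qed.

Definition Df_along (phi psi : R -> pt n -> R) (s : R) (x : pt n) : R :=
  Df (phibar phi s) (phibar psi s) x.

Lemma Df_along_contC phi psi : BUC Om alpha phi -> BUC Om alpha psi -> forall s, contC Om (Df_along phi psi s).
Proof. intros H1 H2 s. apply Df_contC; apply (BUC_contC Om alpha); auto. Qed.

Lemma Df_along_unif_cont phi psi : BUC Om alpha phi -> BUC Om alpha psi ->
  bounded_unif_cont Om (Df_along phi psi).
Proof.
  intros Hp Hs.
  pose proof (BUC_unif_cont Om alpha Ha _ Hp) as UG. pose proof (BUC_unif_cont Om alpha Ha _ Hs) as UH.
  pose proof (BUC_contC Om alpha _ Hp) as CG. pose proof (BUC_contC Om alpha _ Hs) as CH.
  intros Sb eps He.
  destruct (Df_bounded_along _ UG CG Sb) as [K [HK0 HK]].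
  pose proof Hs as [_ [[ch Hch] _]].
  set (BH := Rmax ch 0 * exp (alpha * Sb)).
  assert (HBH : 0 <= BH) by (apply Rmult_le_pos; [apply Rmax_r| left; apply exp_pos]).
  destruct (Df_op_cont_along _ UG CG Sb (eps / 2 / (BH + 1))) as [d2 [Hd2 Hd2']]; [apply Rdiv_lt_0_compat; lra|].
  destruct (UH Sb (eps / 2 / (K + 1))) as [d1 [Hd1 Hd1']]; [apply Rdiv_lt_0_compat; lra|].
  destruct (UG Sb d2 Hd2) as [d3 [Hd3 Hd3']].
  exists (Rmin d1 d3). split; [apply Rmin_glb_lt; auto|].
  intros s t Hs' Ht' Hst x Hx. unfold Df_along.
  assert (Hst1 : Rabs (s - t) < d1) by (pose proof (Rmin_l d1 d3); lra).
  assert (Hst3 : Rabs (s - t) < d3) by (pose proof (Rmin_r d1 d3); lra).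
  replace (Df (phibar phi s) (phibar psi s) x - Df (phibar phi t) (phibar psi t) x) with
    (Df (phibar phi s) (fun y => phibar psi s y - phibar psi t y) x +
     (Df (phibar phi s) (phibar psi t) x - Df (phibar phi t) (phibar psi t) x))
    by (rewrite Df_minus by auto; ring).
  eapply Rle_trans; [apply Rabs_triang|].
  assert (A1 : Rabs (Df (phibar phi s) (fun y => phibar psi s y - phibar psi t y) x) <= K * (eps / 2 / (K + 1))).
  { apply (HK s Hs'); auto. apply contC_minus; auto. }
  assert (A2 : Rabs (Df (phibar phi s) (phibar psi t) x - Df (phibar phi t) (phibar psi t) x)
                 <= eps / 2 / (BH + 1) * BH).
  { apply (Hd2' t Ht' (phibar phi s) (CG s) ltac:(intros y Hy; apply Hd3'; auto) (phibar psi t) BH (CH t)); auto.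
    intros y Hy. apply (supBUC_phibar_ball Om alpha Ha psi); auto.
    intros r z Hr Hz. eapply Rle_trans; [apply Hch; auto| apply Rmax_l]. }
  pose proof (Rmult_succ_div_lt K (eps / 2) HK0 ltac:(lra)).
  pose proof (Rmult_succ_div_lt BH (eps / 2) HBH ltac:(lra)). nra.
Qed.

Lemma Df_along_ex_RInt phi psi : BUC Om alpha phi -> BUC Om alpha psi -> forall x, Om x ->
  forall a b, ex_RInt (fun s => Df_along phi psi s x) a b.
Proof.
  intros Hp Hs x Hx. apply (unif_cont_ex_RInt Om); auto. now apply Df_along_unif_cont.
Qed.

Lemma Df_along_lin phi (h1 h2 : prodX n) a b s x : BUC Om alpha phi -> BUC Om alpha (fst h1) ->
  BUC Om alpha (fst h2) -> Om x ->
  Df_along phi (fst (addP (scalP a h1) (scalP b h2))) s x = a * Df_along phi (fst h1) s x + b * Df_along phi (fst h2) s x.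
Proof.
  intros Hp H1 H2 Hx. unfold Df_along.
  rewrite <- (Df_lin _ _ _ a b (BUC_contC Om alpha _ Hp s) (BUC_contC Om alpha _ H1 s) (BUC_contC Om alpha _ H2 s) x Hx).
  f_equal. rewrite !phibar_Rmin. reflexivity.
Qed.

Lemma Df_along_bound phi : BUC Om alpha phi -> forall Sb, exists K, 0 <= K /\
  forall psi c, BUC Om alpha psi -> supBUC_le Om alpha psi c ->
  forall s x, Rabs s <= Sb -> Om x -> Rabs (Df_along phi psi s x) <= K * c.
Proof.
  intros Hp Sb.
  destruct (Df_bounded_along _ (BUC_unif_cont Om alpha Ha _ Hp) (BUC_contC Om alpha _ Hp) Sb) as [K [HK0 HK]].
  exists (K * exp (alpha * Sb)); split; [apply Rmult_le_pos; [lra| left; apply exp_pos]|].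
  intros psi c Hs Hc s x Hsb Hx. unfold Df_along. rewrite Rmult_assoc, (Rmult_comm (exp _)).
  apply (HK s Hsb); auto; [apply (BUC_contC Om alpha); auto|].
  intros y Hy. now apply (supBUC_phibar_ball Om alpha Ha psi c Sb).
Qed.

(* Implicit differentiation of [Phi (fst p) (tauhat p) = snd p]. *)
Definition Dtauhat (p h : prodX n) (x : pt n) : R :=
  (snd h x - RInt (fun s => Df_along (fst p) (fst h) s x) (- tauhat f p x) 0)
    / f_along f (fst p) (- tauhat f p x) x.

Lemma Dtauhat_contC (p h : prodX n) : Dtau Om alpha f p -> memP Om alpha h -> contC Om (Dtauhat p h).
Proof.
  intros HD [HBh Hdh]. destruct (Dtau_tau_control p HD) as (Sb & m & L & K1 & d0 & Hctl).
  pose proof (tau_control_self HD Hctl) as Hp.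
  pose proof HD as [[HBp Hdp] _].
  destruct (Df_along_bound (fst p) HBp Sb) as [K [HK0 HK]].
  pose proof HBh as [_ [[ch Hch] _]].
  assert (Hb : forall x, Om x -> Rabs (- tauhat f p x) <= Sb)
    by (intros x Hx; rewrite Rabs_Ropp; apply (ls_bound Hp x Hx)).
  assert (Htc : contC Om (fun x => - tauhat f p x)).
  { apply (contC_ext Om (fun x => (-1) * tauhat f p x)); [apply contC_scal, tauhat_contC; auto| intros; ring]. }
  apply (contC_div Om _ _ m); [| | apply (tc_m Hctl) |].
  - apply contC_minus; auto.
    apply (contC_RInt_curve Om _ (Df_along_unif_cont _ _ HBp HBh) (Df_along_contC _ _ HBp HBh)
             _ Sb (K * ch)); auto.
    + apply (ls_bound Hp).
    + apply tauhat_contC; auto.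
  - apply (contC_curve_comp Om _ (f_along_unif_cont _ HBp) (f_along_contC _ HBp) _ Sb Htc Hb).
  - intros x Hx. apply (ls_lower Hp); auto.
Qed.

Lemma Dtauhat_lin (p h1 h2 : prodX n) a b : Dtau Om alpha f p -> memP Om alpha h1 -> memP Om alpha h2 ->
  forall x, Om x -> Dtauhat p (addP (scalP a h1) (scalP b h2)) x = a * Dtauhat p h1 x + b * Dtauhat p h2 x.
Proof.
  intros HD [HB1 _] [HB2 _] x Hx. pose proof HD as [[HBp _] _]. unfold Dtauhat.
  rewrite (RInt_ext _ (fun s => a * Df_along (fst p) (fst h1) s x + b * Df_along (fst p) (fst h2) s x))
    by (intros; apply Df_along_lin; auto).
  rewrite RInt_lin_R by (apply Df_along_ex_RInt; auto).
  change (snd (addP (scalP a h1) (scalP b h2)) x) with (a * snd h1 x + b * snd h2 x).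
  pose proof (f_along_pos _ HBp (- tauhat f p x) x Hx). field. lra.
Qed.

Lemma Dtauhat_bounded (p : prodX n) : Dtau Om alpha f p -> exists K, forall h c,
  memP Om alpha h -> normP_le Om alpha h c -> forall x, Om x -> Rabs (Dtauhat p h x) <= K * c.
Proof.
  intros HD. destruct (Dtau_tau_control p HD) as (Sb & m & L & K1 & d0 & Hctl).
  pose proof (tau_control_self HD Hctl) as Hp.
  pose proof HD as [[HBp Hdp] _]. pose proof (tc_m Hctl) as Hm.
  destruct (Df_along_bound (fst p) HBp Sb) as [K [HK0 HK]].
  exists ((1 + Sb * K) / m).
  intros h c [HBh Hdh] [Hn1 Hn2] x Hx.
  assert (Hk : m <= f_along f (fst p) (- tauhat f p x) x).
  { apply (ls_lower Hp); auto. rewrite Rabs_Ropp. apply (ls_bound Hp x Hx). }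
  assert (HJ : Rabs (RInt (fun s => Df_along (fst p) (fst h) s x) (- tauhat f p x) 0)
                 <= Sb * (K * c)).
  { apply abs_RInt_to_zero_le; [apply Df_along_ex_RInt; auto| apply (ls_bound Hp x Hx)|].
    intros s Hs. apply HK; auto. }
  unfold Dtauhat, Rdiv. rewrite Rabs_mult, Rabs_inv, (Rabs_right (f_along _ _ _ _)) by lra.
  apply Rle_trans with (c * (1 + Sb * K) * / m).
  - apply Rmult_le_compat; [apply Rabs_pos| left; apply Rinv_0_lt_compat; lra| |apply Rinv_le_contravar; lra].
    eapply Rle_trans; [apply Rabs_triang_minus|]. pose proof (Hn2 x Hx). nra.
  - right. field. lra.
Qed.

Lemma normP_dist_le_add (p h : prodX n) c : normP_le Om alpha h c -> dist_le Om alpha (addP p h) p c.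
Proof.
  intros [A B]. split.
  - intros t y Ht Hy. simpl. replace (fst p t y + fst h t y - fst p t y) with (fst h t y) by ring. auto.
  - intros y Hy. simpl. replace (snd p y + snd h y - snd p y) with (snd h y) by ring. auto.
Qed.

Lemma normP_dist_le_sub (q p : prodX n) c : normP_le Om alpha (addP q (scalP (-1) p)) c -> dist_le Om alpha q p c.
Proof.
  intros [A B]. split.
  - intros t y Ht Hy. specialize (A t y Ht Hy). simpl in A.
    replace (fst q t y + -1 * fst p t y) with (fst q t y - fst p t y) in A by ring. auto.
  - intros y Hy. specialize (B y Hy). simpl in B.
    replace (snd q y + -1 * snd p y) with (snd q y - snd p y) in B by ring. auto.
Qed.

Lemma f_along_addP (p h : prodX n) s x :
  f_along f (fst (addP p h)) s x = f (fun y => phibar (fst p) s y + phibar (fst h) s y) x.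
Proof. unfold f_along. rewrite !phibar_Rmin. reflexivity. Qed.

Lemma tauhat_taylor_le (p h : prodX n) x Sb m e1 e2 :
  BUC Om alpha (fst p) -> BUC Om alpha (fst h) -> BUC Om alpha (fst (addP p h)) -> Om x -> 0 < m ->
  Phi f (fst (addP p h)) (tauhat f (addP p h) x) x = snd (addP p h) x ->
  Phi f (fst p) (tauhat f p x) x = snd p x -> Rabs (tauhat f p x) <= Sb ->
  m <= f_along f (fst p) (- tauhat f p x) x ->
  (forall s, Rmin (- tauhat f (addP p h) x) (- tauhat f p x) <= s <= Rmax (- tauhat f (addP p h) x) (- tauhat f p x) ->
     Rabs (f_along f (fst (addP p h)) s x - f_along f (fst p) (- tauhat f p x) x) <= e1) ->
  (forall s, Rabs s <= Sb ->
     Rabs (f_along f (fst (addP p h)) s x - f_along f (fst p) s x - Df_along (fst p) (fst h) s x) <= e2) ->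
  Rabs (tauhat f (addP p h) x - tauhat f p x - Dtauhat p h x)
    <= (Rabs (tauhat f (addP p h) x - tauhat f p x) * e1 + Sb * e2) / m.
Proof.
  intros HBp HBh HBq Hx Hm Eq Ep Hbp Ha' H1 H2.
  set (q := addP p h) in *. set (t := tauhat f p x) in *. set (t' := tauhat f q x) in *.
  set (a := f_along f (fst p) (- t) x) in *.
  assert (Iq := f_along_ex_RInt _ HBq x Hx). assert (Ip := f_along_ex_RInt _ HBp x Hx).
  assert (Iw := Df_along_ex_RInt _ _ HBp HBh x Hx).
  unfold Dtauhat. fold t a.
  rewrite (implicit_increment_identity (fun s => f_along f (fst q) s x) (fun s => f_along f (fst p) s x)
             _ t t' a (snd h x)); auto; [|lra|].
  2:{ unfold Phi in Eq, Ep. rewrite Eq, Ep. reflexivity. }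
  unfold Rdiv. rewrite Rabs_mult, Rabs_Ropp, Rabs_inv, (Rabs_right a) by lra.
  apply Rmult_le_compat; [apply Rabs_pos| left; apply Rinv_0_lt_compat; lra| |apply Rinv_le_contravar; lra].
  eapply Rle_trans; [apply Rabs_triang|]. apply Rplus_le_compat.
  - replace (Rabs (t' - t)) with (Rabs (- t - - t')) by (f_equal; ring).
    apply abs_RInt_le_length; [apply ex_RInt_minus_R; auto; apply ex_RInt_const| auto].
  - apply abs_RInt_to_zero_le; auto.
    apply ex_RInt_minus_R; auto. apply ex_RInt_minus_R; auto.
Qed.

Lemma f_along_frechet (p : prodX n) : BUC Om alpha (fst p) -> forall Sb eps, 0 < eps -> exists d, 0 < d /\
  forall (h : prodX n) c, BUC Om alpha (fst h) -> supBUC_le Om alpha (fst h) c -> c <= d ->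
  forall s x, Rabs s <= Sb -> Om x ->
  Rabs (f_along f (fst (addP p h)) s x - f_along f (fst p) s x - Df_along (fst p) (fst h) s x) <= eps * c.
Proof.
  intros HBp Sb eps He. set (E := exp (alpha * Sb)). assert (HE : 0 < E) by apply exp_pos.
  destruct (Df_frechet_along _ (BUC_unif_cont Om alpha Ha _ HBp) (BUC_contC Om alpha _ HBp) Sb (eps / E))
    as [dF [HdF HdF']]; [apply Rdiv_lt_0_compat; lra|].
  exists (dF / E). split; [apply Rdiv_lt_0_compat; lra|].
  intros h c HBh Hc Hcd s x Hs Hx. rewrite f_along_addP. unfold Df_along.
  replace (eps * c) with (eps / E * (c * E)) by (field; lra).
  apply (HdF' s Hs (phibar (fst h) s) (c * E)); auto.
  - apply (BUC_contC Om alpha); auto.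
  - intros y Hy. apply (supBUC_phibar_ball Om alpha Ha _ _ Sb Hc); auto.
  - apply Rle_trans with (dF / E * E); [apply Rmult_le_compat_r; lra| right; field; lra].
Qed.

Lemma Df_along_op_cont (p : prodX n) : BUC Om alpha (fst p) -> forall Sb eps, 0 < eps -> exists d, 0 < d /\
  forall (q h : prodX n) c ch, BUC Om alpha (fst q) -> BUC Om alpha (fst h) ->
  dist_le Om alpha q p c -> c <= d -> supBUC_le Om alpha (fst h) ch ->
  forall s x, Rabs s <= Sb -> Om x ->
  Rabs (Df_along (fst p) (fst h) s x - Df_along (fst q) (fst h) s x) <= eps * ch.
Proof.
  intros HBp Sb eps He. set (E := exp (alpha * Sb)). assert (HE : 0 < E) by apply exp_pos.
  destruct (Df_op_cont_along _ (BUC_unif_cont Om alpha Ha _ HBp) (BUC_contC Om alpha _ HBp) Sb (eps / E))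
    as [du [Hdu Hdu']]; [apply Rdiv_lt_0_compat; lra|].
  exists (du / E). split; [apply Rdiv_lt_0_compat; lra|].
  intros q h c ch HBq HBh Hd Hcd Hch s x Hs Hx. rewrite Rabs_minus_sym. unfold Df_along.
  replace (eps * ch) with (eps / E * (ch * E)) by (field; lra).
  apply (Hdu' s Hs); auto.
  - apply (BUC_contC Om alpha); auto.
  - intros y Hy. eapply Rle_trans; [apply (dist_le_phibar q p c Hd s y Hy)|].
    pose proof (dist_le_nonneg q p c y Hd Hy).
    apply Rle_trans with (c * E); [apply Rmult_le_compat_l; auto; apply exp_le, Rmult_le_compat_l; auto|].
    apply Rle_trans with (du / E * E); [apply Rmult_le_compat_r; lra| right; field; lra].
  - apply (BUC_contC Om alpha); auto.
  - intros y Hy. apply (supBUC_phibar_ball Om alpha Ha _ _ Sb Hch); auto.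
Qed.

Lemma f_along_segment_le (p q : prodX n) c Sb m L x ew dw : Om x -> 0 <= L -> 0 <= c ->
  local_solution p q c Sb m L -> Rabs (tauhat f p x) <= Sb ->
  (forall s t, Rabs s <= Sb -> Rabs t <= Sb -> Rabs (s - t) < dw -> forall x, Om x ->
     Rabs (f_along f (fst p) s x - f_along f (fst p) t x) <= ew) ->
  Rabs (tauhat f q x - tauhat f p x) < dw ->
  forall s, Rmin (- tauhat f q x) (- tauhat f p x) <= s <= Rmax (- tauhat f q x) (- tauhat f p x) ->
  Rabs (f_along f (fst q) s x - f_along f (fst p) (- tauhat f p x) x) <= L * (c * exp (alpha * Sb)) + ew.
Proof.
  intros Hx HL Hc Hq Hbp Hdw Htq s Hs.
  assert (Hsb : Rabs s <= Sb).
  { apply (Rabs_le_segment (- tauhat f q x) (- tauhat f p x)); rewrite ?Rabs_Ropp; auto.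
    apply (ls_bound Hq x Hx). }
  replace (f_along f (fst q) s x - f_along f (fst p) (- tauhat f p x) x) with
    ((f_along f (fst q) s x - f_along f (fst p) s x) + (f_along f (fst p) s x - f_along f (fst p) (- tauhat f p x) x))
    by ring.
  eapply Rle_trans; [apply Rabs_triang|]. apply Rplus_le_compat.
  - eapply Rle_trans; [apply (ls_f_along Hq); auto|].
    apply Rmult_le_compat_l; auto. apply Rmult_le_compat_l; auto. apply exp_le, Rmult_le_compat_l; auto.
  - apply Hdw; auto; [now rewrite Rabs_Ropp|].
    eapply Rle_lt_trans; [apply Rabs_sub_le_segment, Hs|].
    replace (- tauhat f q x - - tauhat f p x) with (- (tauhat f q x - tauhat f p x)) by ring.
    now rewrite Rabs_Ropp.
Qed.

Lemma tauhat_frechet (p : prodX n) : Dtau Om alpha f p -> forall eps, 0 < eps -> exists d, 0 < d /\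
  forall h c, memP Om alpha h -> Dtau Om alpha f (addP p h) -> normP_le Om alpha h c -> c < d ->
  forall x, Om x -> Rabs (tauhat f (addP p h) x - tauhat f p x - Dtauhat p h x) <= eps * c.
Proof.
  intros HD eps He. destruct (Dtau_tau_control p HD) as (Sb & m & L & K1 & d0 & Hctl).
  pose proof Hctl as [HSb Hm HL HK1 Hd0 Hsol Htl].
  pose proof (tau_control_self HD Hctl) as Hp. pose proof HD as [[HBp Hdp] _].
  set (E := exp (alpha * Sb)). assert (HE : 0 < E) by apply exp_pos.
  assert (HLE : 0 <= L * E) by (apply Rmult_le_pos; lra).
  set (ew := eps * m / 4 / (K1 + 1)).
  assert (Hew : 0 < ew) by (apply Rdiv_lt_0_compat; [apply Rdiv_lt_0_compat; [apply Rmult_lt_0_compat|]|]; lra).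
  destruct (f_along_unif_cont _ HBp Sb ew Hew) as [dw [Hdw Hdw']].
  set (e2 := eps * m / 2 / (Sb + 1)).
  assert (He2 : 0 < e2) by (repeat apply Rdiv_lt_0_compat; nra).
  destruct (f_along_frechet p HBp Sb e2 He2) as [dF [HdF HdF']].
  destruct (pos_lower_bound4 d0 (dw / (K1 + 1)) (ew / (L * E + 1)) dF) as (d & Hd & Hd0' & Hdw1 & Hdew & HdF1);
    try apply Rdiv_lt_0_compat; try lra.
  exists d. split; auto. intros h c [HBh _] HDq [Hn1 Hn2] Hc x Hx.
  pose proof (normP_dist_le_add p h c (conj Hn1 Hn2)) as Hdist.
  pose proof (dist_le_nonneg _ _ c x Hdist Hx) as Hc0.
  assert (Hq := Hsol _ c (proj1 HDq) Hdist ltac:(lra)).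
  assert (Htq := Htl _ c (proj1 HDq) Hdist ltac:(lra) x Hx).
  assert (Hdtau := tau_control_tauhat_lt p (addP p h) Sb m L K1 d0 c dw Hctl (proj1 HDq) Hdist ltac:(lra) ltac:(lra) x Hx).
  eapply Rle_trans.
  { apply (tauhat_taylor_le p h x Sb m (L * (c * E) + ew) (e2 * c)); auto.
    - apply (proj1 (proj1 HDq)).
    - apply (ls_solves Hq x Hx).
    - apply (ls_solves Hp x Hx).
    - apply (ls_bound Hp x Hx).
    - apply (ls_lower Hp); auto. rewrite Rabs_Ropp. apply (ls_bound Hp x Hx).
    - apply (f_along_segment_le p _ c Sb m L x ew dw); auto. apply (ls_bound Hp x Hx).
    - intros s Hs. apply HdF'; auto; lra. }
  apply taylor_budget_le; auto.
  - apply Rmult_le_pos; auto. apply Rmult_le_pos; lra.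
  - fold ew. replace (L * (c * E)) with ((L * E) * c) by ring. apply Rmult_le_of_le_succ_div; lra.
  - split; [apply Rabs_pos | exact Htq].
Qed.

Lemma Dtauhat_diff_le (p q h : prodX n) x Sb m Kw ee ea ch :
  BUC Om alpha (fst p) -> BUC Om alpha (fst q) -> BUC Om alpha (fst h) -> Om x -> 0 < m -> 0 <= ch ->
  ee <= 1 -> Rabs (tauhat f p x) <= Sb -> Rabs (tauhat f q x) <= Sb ->
  m <= f_along f (fst p) (- tauhat f p x) x -> m <= f_along f (fst q) (- tauhat f q x) x ->
  Rabs (f_along f (fst p) (- tauhat f p x) x - f_along f (fst q) (- tauhat f q x) x) <= ea ->
  Rabs (snd h x) <= ch ->
  (forall s, Rabs s <= Sb -> Rabs (Df_along (fst p) (fst h) s x) <= Kw * ch) ->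
  (forall s, Rabs s <= Sb -> Rabs (Df_along (fst p) (fst h) s x - Df_along (fst q) (fst h) s x) <= ee * ch) ->
  Rabs (Dtauhat q h x - Dtauhat p h x)
    <= ch * ((1 + Sb * (Kw + 1)) * ea / (m * m) + (Rabs (tauhat f q x - tauhat f p x) * Kw + Sb * ee) / m).
Proof.
  intros HBp HBq HBh Hx Hm Hch Hee Hbp Hbq Hap Haq Hea Hu HW He. unfold Dtauhat.
  assert (Iq := Df_along_ex_RInt _ _ HBq HBh x Hx). assert (Ip := Df_along_ex_RInt _ _ HBp HBh x Hx).
  assert (HSb : 0 <= Sb) by (pose proof (Rabs_pos (tauhat f p x)); lra).
  eapply Rle_trans; [apply Rabs_quot_diff_le; eauto|].
  rewrite Rmult_plus_distr_l. apply Rplus_le_compat; unfold Rdiv; rewrite <- Rmult_assoc.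
  - apply Rmult_le_compat_r; [left; apply Rinv_0_lt_compat; nra|].
    rewrite <- Rmult_assoc. apply Rmult_le_compat; try apply Rabs_pos; auto.
    eapply Rle_trans; [apply Rabs_triang_minus|].
    replace (ch * (1 + Sb * (Kw + 1))) with (ch + Sb * (Kw * ch + 1 * ch)) by ring.
    apply Rplus_le_compat; auto.
    apply abs_RInt_to_zero_le; auto. intros s Hs.
    replace (Df_along (fst q) (fst h) s x)
      with (Df_along (fst p) (fst h) s x - (Df_along (fst p) (fst h) s x - Df_along (fst q) (fst h) s x)) by ring.
    eapply Rle_trans; [apply Rabs_triang_minus|]. apply Rplus_le_compat; auto.
    eapply Rle_trans; [apply He; auto| apply Rmult_le_compat_r; auto].
  - apply Rmult_le_compat_r; [left; apply Rinv_0_lt_compat; lra|].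
    replace (ch * (Rabs (tauhat f q x - tauhat f p x) * Kw + Sb * ee))
      with (Rabs (tauhat f p x - tauhat f q x) * (Kw * ch) + Sb * (ee * ch))
      by (rewrite Rabs_minus_sym; ring).
    apply RInt_to_zero_diff_le; auto.
Qed.

Lemma Dtauhat_op_cont (p : prodX n) : Dtau Om alpha f p -> forall eps, 0 < eps -> exists d, 0 < d /\
  forall q c, Dtau Om alpha f q -> dist_le Om alpha q p c -> c < d ->
  forall h ch, memP Om alpha h -> normP_le Om alpha h ch ->
  forall x, Om x -> Rabs (Dtauhat q h x - Dtauhat p h x) <= eps * ch.
Proof.
  intros HD eps He. destruct (Dtau_tau_control p HD) as (Sb & m & L & K1 & d0 & Hctl).
  pose proof Hctl as [HSb Hm HL HK1 Hd0 Hsol Htl].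
  pose proof (tau_control_self HD Hctl) as Hp. pose proof HD as [[HBp Hdp] _].
  destruct (Df_along_bound (fst p) HBp Sb) as [Kp [HKp0 HKp]].
  set (E := exp (alpha * Sb)). assert (HLE : 0 <= L * E) by (apply Rmult_le_pos; [|left; apply exp_pos]; lra).
  set (ea := eps * (m * m) / 2 / (1 + Sb * (Kp + 1))).
  assert (HNB : 0 < 1 + Sb * (Kp + 1)) by (pose proof (Rmult_le_pos Sb (Kp + 1) HSb ltac:(lra)); lra).
  assert (Hea0 : 0 < ea) by (unfold ea; pose proof (Rmult_lt_0_compat _ _ Hm Hm);
                             repeat apply Rdiv_lt_0_compat; try apply Rmult_lt_0_compat; lra).
  set (ee := Rmin 1 (eps * m / 4 / (Sb + 1))).
  assert (Hee : 0 < ee) by (apply Rmin_glb_lt; [lra|]; repeat apply Rdiv_lt_0_compat; try apply Rmult_lt_0_compat; lra).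
  assert (Hee1 : ee <= 1) by apply Rmin_l. assert (Hee2 : ee <= eps * m / 4 / (Sb + 1)) by apply Rmin_r.
  destruct (f_along_unif_cont _ HBp Sb (ea / 2) ltac:(lra)) as [dw [Hdw Hdw']].
  destruct (Df_along_op_cont p HBp Sb ee Hee) as [du [Hdu Hdu']].
  set (dt := Rmin dw (eps * m / 4 / (Kp + 1))).
  assert (Hdt : 0 < dt) by (apply Rmin_glb_lt; auto; repeat apply Rdiv_lt_0_compat; try apply Rmult_lt_0_compat; lra).
  assert (Hdtw : dt <= dw) by apply Rmin_l. assert (Hdte : dt <= eps * m / 4 / (Kp + 1)) by apply Rmin_r.
  destruct (pos_lower_bound4 d0 (dt / (K1 + 1)) (ea / 2 / (L * E + 1)) du) as (d & Hd & Hd0' & Hdt1 & Hdea & Hdu1);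
    try (apply Rdiv_lt_0_compat; try apply Rdiv_lt_0_compat); try lra.
  exists d. split; auto. intros q c HDq Hdist Hc h ch [HBh Hdh] [Hn1 Hn2] x Hx.
  assert (Hq := Hsol q c (proj1 HDq) Hdist ltac:(lra)).
  pose proof (proj1 (proj1 HDq)) as HBq. pose proof (dist_le_nonneg _ _ c x Hdist Hx) as Hc0.
  assert (ch0 : 0 <= ch) by (pose proof (Hn2 x Hx); pose proof (Rabs_pos (snd h x)); lra).
  assert (Hbp := ls_bound Hp x Hx). assert (Hbq := ls_bound Hq x Hx).
  assert (Hdtau := tau_control_tauhat_lt p q Sb m L K1 d0 c dt Hctl (proj1 HDq) Hdist ltac:(lra) ltac:(lra) x Hx).
  assert (Hap : m <= f_along f (fst p) (- tauhat f p x) x)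
    by (apply (ls_lower Hp); auto; now rewrite Rabs_Ropp).
  assert (Haq : m <= f_along f (fst q) (- tauhat f q x) x)
    by (apply (ls_lower Hq); auto; now rewrite Rabs_Ropp).
  assert (Hea : Rabs (f_along f (fst p) (- tauhat f p x) x - f_along f (fst q) (- tauhat f q x) x) <= ea).
  { rewrite Rabs_minus_sym. eapply Rle_trans.
    - apply (f_along_segment_le p q c Sb m L x (ea / 2) dw); auto; [lra|]. split; [apply Rmin_l | apply Rmax_l].
    - fold E. replace (L * (c * E)) with ((L * E) * c) by ring.
      pose proof (Rmult_le_of_le_succ_div (L * E) c (ea / 2) HLE Hc0 ltac:(lra)). lra. }
  assert (HW : forall s, Rabs s <= Sb -> Rabs (Df_along (fst p) (fst h) s x) <= Kp * ch)
    by (intros s Hs; apply (HKp (fst h) ch HBh Hn1 s x Hs Hx)).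
  assert (Hw : forall s, Rabs s <= Sb ->
            Rabs (Df_along (fst p) (fst h) s x - Df_along (fst q) (fst h) s x) <= ee * ch)
    by (intros s Hs; apply (Hdu' q h c ch); auto; lra).
  eapply Rle_trans; [apply (Dtauhat_diff_le p q h x Sb m Kp ee ea ch); auto|].
  rewrite Rmult_comm. apply Rmult_le_compat_r; auto.
  apply quotient_budget_le; auto; split; try apply Rabs_pos; lra.
Qed.

Lemma Dtau_open (p : prodX n) : Dtau Om alpha f p -> exists r, 0 < r /\
  forall q, memP Om alpha q -> (exists c, c < r /\ normP_le Om alpha (addP q (scalP (-1) p)) c) ->
  Dtau Om alpha f q.
Proof.
  intros HD. destruct (Dtau_tau_control p HD) as (Sb & m & L & K1 & d0 & Hctl).
  exists d0. split; [apply (tc_d0 Hctl)|]. intros q Hq [c [Hc Hn]].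
  apply (ls_Dtau (tc_solution Hctl q c Hq (normP_dist_le_sub q p c Hn) Hc)).
Qed.

Lemma tauhat_C1 : C1_map Om (memP Om alpha) (normP_le Om alpha) addP scalP
  (Dtau Om alpha f) (tauhat f) Dtauhat.
Proof.
  refine (conj _ (conj _ (conj _ (conj _ (conj _ _))))).
  - exact tauhat_contC.
  - intros p HD h Hh. now apply Dtauhat_contC.
  - intros p HD h1 h2 a b H1 H2 x Hx. now apply Dtauhat_lin.
  - intros p HD. destruct (Dtauhat_bounded p HD) as [K HK]. exists K. intros h c Hh Hn x Hx. now apply HK.
  - intros p HD eps He. destruct (tauhat_frechet p HD eps He) as [d [Hd Hd']].
    exists d; split; [exact Hd|]. intros h c Hh HDq Hn Hc x Hx. now apply Hd'.
  - intros p HD eps He. destruct (Dtauhat_op_cont p HD eps He) as [d [Hd Hd']].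
    exists d; split; [exact Hd|]. intros q HDq [c' [Hc' Hn']] h c Hh Hn x Hx.
    apply (Hd' q c'); auto. now apply normP_dist_le_sub.
Qed.

End Tauhat.

Theorem lemma3p5 (n : nat) (Om : pt n -> Prop) (alpha Mf : R)
  (f : (pt n -> R) -> (pt n -> R)) :
  compact_set Om ->
  0 <= alpha ->
  (forall g, contC Om g -> contC Om (f g)) ->
  lipschitzC Om f ->
  (forall g x, contC Om g -> Om x -> 0 < f g x <= Mf) ->
  (forall g h, contC Om g -> contC Om h -> (forall x, Om x -> g x <= h x) ->
     forall x, Om x -> f h x <= f g x) ->
  (exists Df, C1_map Om (contC Om) (supC_le Om) addF scalF (contC Om) f Df) ->
  (forall p, Dtau Om alpha f p -> exists r, 0 < r /\
     forall q, memP Om alpha q ->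
       (exists c, c < r /\ normP_le Om alpha (addP q (scalP (-1) p)) c) ->
       Dtau Om alpha f q) /\
  (exists DT, C1_map Om (memP Om alpha) (normP_le Om alpha) addP scalP
                (Dtau Om alpha f) (tauhat f) DT).
Proof.
  intros HC Ha Hfc Hlip Hpos Hmono [Df HDf]. split.
  - eapply Dtau_open; eauto.
  - eexists. eapply tauhat_C1; eauto.
Qed.
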